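(* The commutator subgroup $F_\tau'=[F_\tau,F_\tau]$ is a simple group.
   Context: Let $\tau=(\sqrt5-1)/2$. $F_\tau$ is the group, under composition, of orientation-preserving homeomorphisms of $[0,1]$ that are piecewise linear with finitely many breakpoints, all breakpoints in $\mathbb{Z}[\tau]=\{a+b\tau:a,b\in\mathbb{Z}\}$ and all slopes integer powers of $\tau$. *)

From Stdlib Require Import Reals ZArith.
Open Scope R_scope.

Definition tau : R := (sqrt 5 - 1) / 2.

Definition in_Ztau (x : R) : Prop :=
  exists a b : Z, x = IZR a + IZR b * tau.

(* Elements of F_tau, encoded as functions R -> R that are the identity
   outside [0,1] (so that equality and composition are the usual ones).
   On [0,1]: there is a finite subdivision 0 = p 0 < p 1 < ... < p n = 1
   with all p i in Z[tau], on each [p i, p (i+1)] f is affine with slope an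
   integer power of tau, and f 0 = 0, f 1 = 1.  Such an f is continuous,
   strictly increasing, hence an orientation-preserving PL homeomorphism
   of [0,1]; conversely every element of F_tau arises this way. *)
Definition in_Ftau (f : R -> R) : Prop :=
  (forall x, (x < 0 \/ 1 < x) -> f x = x) /\
  f 0 = 0 /\ f 1 = 1 /\
  exists (n : nat) (p : nat -> R),
    p 0%nat = 0 /\ p n = 1 /\
    (forall i, (i < n)%nat -> p i < p (S i)) /\
    (forall i, (i <= n)%nat -> in_Ztau (p i)) /\
    (forall i, (i < n)%nat ->
       exists k : Z, forall x, p i <= x <= p (S i) ->
         f x = f (p i) + powerRZ tau k * (x - p i)).

Definition idR : R -> R := fun x => x.

Definition comp (f g : R -> R) : R -> R := fun x => f (g x).

Definition inverse_of (g' g : R -> R) : Prop :=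
  comp g g' = idR /\ comp g' g = idR.

Definition is_commutator (c : R -> R) : Prop :=
  exists f g f' g', in_Ftau f /\ in_Ftau g /\
    inverse_of f' f /\ inverse_of g' g /\
    c = comp f' (comp g' (comp f g)).

(* The commutator subgroup F_tau' : the subgroup generated by commutators,
   i.e. the finite products of commutators (the inverse of a commutator is
   again a commutator). *)
Inductive in_Ftau' : (R -> R) -> Prop :=
  | Ftau'_id : in_Ftau' idR
  | Ftau'_mul : forall h c, in_Ftau' h -> is_commutator c ->
      in_Ftau' (comp h c).

Definition normal_subgroup_of_Ftau' (N : (R -> R) -> Prop) : Prop :=
  (forall h, N h -> in_Ftau' h) /\
  N idR /\
  (forall h k, N h -> N k -> N (comp h k)) /\
  (forall h h', N h -> inverse_of h' h -> N h') /\
  (forall h g g', N h -> in_Ftau' g -> inverse_of g' g ->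
     N (comp g' (comp h g))).

Definition Ftau'_simple : Prop :=
  (exists h, in_Ftau' h /\ h <> idR) /\
  (forall N, normal_subgroup_of_Ftau' N ->
     (forall h, N h -> h = idR) \/ (forall h, in_Ftau' h -> N h)).

(* Slopes at 0 and at 1 are multiplicative, so every element of F_tau' is the identity near
   both endpoints. Any two intervals with endpoints in Z[tau] are matched by an element of
   F_tau: every positive element of Z[tau] is a sum of powers of tau, and
   tau^k = tau^(k+1) + tau^(k+2) lets such sums be lengthened at will. Consequently every
   element of F_tau agrees on a compact subinterval of (0, 1) with an element of F_tau', so a
   normal subgroup N of F_tau' is normalised by all of F_tau. If N contains some g <> 1, a
   conjugate of g moves a given interval [c, d] off itself, and Higman's trick puts into N
   every commutator of two elements supported in [c, d], hence every commutator [h, f] with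
   h compactly supported. Finally, writing f = h a^k b^m with h compactly supported, where
   a and b have slope tau at 0, resp. 1, and disjoint supports, turns every commutator
   [f, k] into a product of conjugates of such commutators. *)

From Pilot Require Import Defs.
From Stdlib Require Import Reals ZArith Lra Lia List Classical FunctionalExtensionality.
Open Scope R_scope.

(* Reals exports its own [comp] (Ranalysis1), which would shadow the one of Defs. *)
Local Notation comp := Defs.comp (only parsing).

(** * The golden ratio and the ring Z[tau] *)

Lemma tau_sq : tau * tau = 1 - tau.
Proof. unfold tau. pose proof (sqrt_sqrt 5 ltac:(lra)). lra. Qed.

Lemma tau_pos : 0 < tau.
Proof. unfold tau. pose proof (sqrt_sqrt 5 ltac:(lra)). pose proof (sqrt_pos 5). nra. Qed.

Lemma tau_lt_1 : tau < 1.
Proof. unfold tau. pose proof (sqrt_sqrt 5 ltac:(lra)). pose proof (sqrt_pos 5). nra. Qed.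

Lemma tau_inv : / tau = 1 + tau.
Proof. pose proof tau_sq. pose proof tau_pos. field_simplify_eq; lra. Qed.

Lemma Ztau_IZR a : in_Ztau (IZR a).
Proof. exists a, 0%Z. lra. Qed.

Lemma Ztau_0 : in_Ztau 0.
Proof. exact (Ztau_IZR 0). Qed.

Lemma Ztau_1 : in_Ztau 1.
Proof. exact (Ztau_IZR 1). Qed.

Lemma Ztau_tau : in_Ztau tau.
Proof. exists 0%Z, 1%Z. simpl. ring. Qed.

Lemma Ztau_add x y : in_Ztau x -> in_Ztau y -> in_Ztau (x + y).
Proof.
  intros [a [b ->]] [c [d ->]]. exists (a + c)%Z, (b + d)%Z. rewrite !plus_IZR. ring.
Qed.

Lemma Ztau_opp x : in_Ztau x -> in_Ztau (- x).
Proof. intros [a [b ->]]. exists (- a)%Z, (- b)%Z. rewrite !opp_IZR. ring. Qed.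

Lemma Ztau_sub x y : in_Ztau x -> in_Ztau y -> in_Ztau (x - y).
Proof. intros. apply Ztau_add, Ztau_opp; assumption. Qed.

Lemma Ztau_mul x y : in_Ztau x -> in_Ztau y -> in_Ztau (x * y).
Proof.
  intros [a [b ->]] [c [d ->]]. exists (a * c + b * d)%Z, (a * d + b * c - b * d)%Z.
  rewrite minus_IZR, !plus_IZR, !mult_IZR.
  transitivity (IZR a * IZR c + (IZR a * IZR d + IZR b * IZR c) * tau
                + IZR b * IZR d * (tau * tau)); [ring|].
  rewrite tau_sq. ring.
Qed.

Lemma Ztau_pow x n : in_Ztau x -> in_Ztau (x ^ n).
Proof. intros Hx. induction n as [|n IH]; simpl; [apply Ztau_1 | apply Ztau_mul; assumption]. Qed.

Definition tpow (k : Z) : R := powerRZ tau k.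

Lemma tpow_pos k : 0 < tpow k.
Proof. apply powerRZ_lt, tau_pos. Qed.

Lemma tpow_add k m : tpow (k + m) = tpow k * tpow m.
Proof. apply powerRZ_add. pose proof tau_pos. lra. Qed.

Lemma tpow_1 : tpow 1 = tau.
Proof. unfold tpow. simpl. ring. Qed.

Lemma tpow_succ k : tpow (k + 1) = tau * tpow k.
Proof. rewrite tpow_add, tpow_1. ring. Qed.

Lemma tpow_opp_mul k : tpow (- k) * tpow k = 1.
Proof. rewrite <- tpow_add, Z.add_opp_diag_l. reflexivity. Qed.

Lemma tpow_split k : tpow k = tpow (k + 1) + tpow (k + 2).
Proof.
  replace (k + 2)%Z with (k + 1 + 1)%Z by lia. rewrite !tpow_succ.
  replace (tau * (tau * tpow k)) with ((tau * tau) * tpow k) by ring. rewrite tau_sq. ring.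
Qed.

Lemma Ztau_tpow k : in_Ztau (tpow k).
Proof.
  unfold tpow. destruct k as [|p|p]; simpl.
  - apply Ztau_1.
  - apply Ztau_pow, Ztau_tau.
  - rewrite <- pow_inv, tau_inv. apply Ztau_pow, Ztau_add; [apply Ztau_1 | apply Ztau_tau].
Qed.

Lemma tpow_lt_pred k : tpow (k + 1) < tpow k.
Proof. rewrite tpow_succ. pose proof (tpow_pos k). pose proof tau_lt_1. nra. Qed.

Lemma tpow_sums : 1 = tpow 1 + tpow 2 /\ tpow 1 = tpow 2 + tpow 3 /\ tpow 2 = tpow 3 + tpow 4.
Proof. exact (conj (tpow_split 0) (conj (tpow_split 1) (tpow_split 2))). Qed.

Lemma tpow_chain : 0 < tpow 4 /\ tpow 4 < tpow 3 /\ tpow 3 < tpow 2 /\ tpow 2 < tpow 1 /\ tpow 1 < 1.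
Proof.
  pose proof (tpow_pos 4). pose proof (tpow_lt_pred 3) as H3. pose proof (tpow_lt_pred 2) as H2.
  pose proof (tpow_lt_pred 1) as H1. pose proof (tpow_lt_pred 0) as H0.
  change (tpow 4 < tpow 3) in H3. change (tpow 3 < tpow 2) in H2.
  change (tpow 2 < tpow 1) in H1. change (tpow 1 < 1) in H0. auto.
Qed.

Lemma tpow_opp1_mul k : tpow (- 1) * tpow (k + 1) = tpow k.
Proof. rewrite <- tpow_add. f_equal. lia. Qed.

Lemma Ztau_dense x y : x < y -> exists z, in_Ztau z /\ x < z < y.
Proof.
  intros Hxy.
  assert (Htau : Rabs tau < 1) by (rewrite Rabs_pos_eq; pose proof tau_pos; pose proof tau_lt_1; lra).
  destruct (pow_lt_1_zero tau Htau (y - x) ltac:(lra)) as [N HN].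
  specialize (HN N (le_n N)).
  assert (He : 0 < tau ^ N) by (apply pow_lt, tau_pos).
  rewrite Rabs_pos_eq in HN by lra.
  destruct (archimed (x / tau ^ N)) as [H1 H2].
  exists (IZR (up (x / tau ^ N)) * tau ^ N). split.
  - apply Ztau_mul; [apply Ztau_IZR | apply Ztau_pow, Ztau_tau].
  - unfold Rdiv in *. split.
    + apply (Rmult_lt_compat_r (tau ^ N)) in H1; [|lra].
      rewrite Rmult_assoc, Rinv_l in H1 by lra. lra.
    + assert (H3 : IZR (up (x * / tau ^ N)) <= x * / tau ^ N + 1) by lra.
      apply (Rmult_le_compat_r (tau ^ N)) in H3; [|lra].
      rewrite Rmult_plus_distr_r, Rmult_assoc, Rinv_l in H3 by lra. lra.
Qed.

Fixpoint sum_tpow (E : list Z) : R :=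
  match E with nil => 0 | e :: E => tpow e + sum_tpow E end.

Lemma sum_tpow_app E F : sum_tpow (E ++ F) = sum_tpow E + sum_tpow F.
Proof. induction E as [|e E IH]; simpl; [|rewrite IH]; ring. Qed.

Lemma sum_tpow_repeat e n : sum_tpow (repeat e n) = INR n * tpow e.
Proof. induction n as [|n IH]; [simpl | rewrite S_INR; simpl; rewrite IH]; ring. Qed.

Lemma Ztau_scale_conj a b n : exists A B : Z,
  (IZR a + IZR b * tau) * (1 + tau) ^ n = IZR A + IZR B * tau /\
  IZR A - IZR B * (1 + tau) = (IZR a - IZR b * (1 + tau)) * (- tau) ^ n.
Proof.
  induction n as [|n (A & B & H1 & H2)].
  - exists a, b. split; ring.
  - exists (A + B)%Z, A. rewrite plus_IZR. simpl.
    assert (Hsq : IZR B * (tau * tau) = IZR B * (1 - tau)) by (rewrite tau_sq; ring).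
    split.
    + transitivity ((1 + tau) * ((IZR a + IZR b * tau) * (1 + tau) ^ n)); [ring|].
      rewrite H1. lra.
    + transitivity (- tau * ((IZR a - IZR b * (1 + tau)) * (- tau) ^ n)); [|ring].
      rewrite <- H2. lra.
Qed.

(* [x (1 + tau)^N] grows with [N] while its Galois conjugate [(a - b (1 + tau)) (- tau)^N]
   shrinks, so both coordinates of [x (1 + tau)^N] are eventually nonnegative. *)
Lemma Ztau_pos_two_tpow x : in_Ztau x -> 0 < x ->
  exists (A B : Z) (N : nat), (0 <= A)%Z /\ (0 < B)%Z /\ x = (IZR A + IZR B * tau) * tau ^ N.
Proof.
  intros [a [b Hx]] Hpos.
  set (c := IZR a - IZR b * (1 + tau)).
  pose proof tau_pos as Hpos_tau. pose proof tau_lt_1 as Hlt_tau. pose proof (Rabs_pos c) as Hc.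
  assert (Htau : Rabs tau < 1) by (rewrite Rabs_pos_eq; lra).
  destruct (pow_lt_1_zero tau Htau (x / (Rabs c + 1))) as [N HN].
  { apply Rdiv_lt_0_compat; lra. }
  specialize (HN N (le_n N)).
  assert (HtN : 0 < tau ^ N) by (apply pow_lt; lra).
  rewrite Rabs_pos_eq in HN by lra.
  assert (Hinv : (1 + tau) ^ N * tau ^ N = 1).
  { rewrite <- Rpow_mult_distr, <- tau_inv, Rinv_l by lra. apply pow1. }
  destruct (Ztau_scale_conj a b N) as (A & B & H1 & H2). rewrite <- Hx in H1. fold c in H2.
  assert (HN' : tau ^ N * (Rabs c + 1) < x).
  { apply (Rmult_lt_compat_r (Rabs c + 1)) in HN; [|lra].
    unfold Rdiv in HN. rewrite Rmult_assoc, Rinv_l in HN by lra. lra. }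
  assert (Hbig : Rabs c + 1 < IZR A + IZR B * tau).
  { rewrite <- H1. assert (Hp : 0 < (1 + tau) ^ N) by (apply pow_lt; lra).
    apply (Rmult_lt_compat_l ((1 + tau) ^ N)) in HN'; [|lra].
    rewrite <- Rmult_assoc, Hinv in HN'. lra. }
  assert (Hsmall : Rabs (IZR A - IZR B * (1 + tau)) <= Rabs c).
  { rewrite H2, Rabs_mult, <- RPow_abs, Rabs_Ropp, (Rabs_pos_eq tau) by lra.
    assert (tau ^ N <= 1) by (rewrite <- (pow1 N); apply pow_incr; lra). nra. }
  pose proof (Rle_abs (IZR A - IZR B * (1 + tau))).
  pose proof (Rle_abs (- (IZR A - IZR B * (1 + tau)))). rewrite Rabs_Ropp in *.
  exists A, B, N. split; [|split].
  - apply le_IZR. nra.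
  - apply lt_IZR. nra.
  - rewrite <- H1, Rmult_assoc, Hinv. ring.
Qed.

Lemma Ztau_pos_sum_tpow x : in_Ztau x -> 0 < x -> exists E, E <> nil /\ x = sum_tpow E.
Proof.
  intros Hx Hpos. destruct (Ztau_pos_two_tpow x Hx Hpos) as (A & B & N & HA & HB & ->).
  exists (repeat (Z.of_nat N) (Z.to_nat A) ++ repeat (Z.of_nat N + 1)%Z (Z.to_nat B)). split.
  - destruct (Z.to_nat B) eqn:EB; [lia|].
    intros Hnil. apply app_eq_nil in Hnil as [_ Hnil]. discriminate.
  - rewrite sum_tpow_app, !sum_tpow_repeat, !INR_IZR_INZ, !Z2Nat.id, tpow_succ by lia.
    unfold tpow. rewrite <- pow_powerRZ. ring.
Qed.

Lemma sum_tpow_lengthen n E : E <> nil ->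
  exists E', length E' = (length E + n)%nat /\ sum_tpow E' = sum_tpow E.
Proof.
  intros HE. induction n as [|n (E' & Hlen & Hsum)].
  - exists E. split; [lia | reflexivity].
  - destruct E' as [|e E']; [destruct E; simpl in Hlen; [congruence | lia]|].
    exists ((e + 1)%Z :: (e + 2)%Z :: E'). split; [simpl in *; lia|].
    rewrite <- Hsum. simpl. rewrite (tpow_split e). ring.
Qed.

(** * Piecewise linear maps with breakpoints in Z[tau] *)

Lemma list_max_with (P : R -> Prop) L : (exists l, In l L /\ P l) ->
  exists m, In m L /\ P m /\ forall l, In l L -> P l -> l <= m.
Proof.
  induction L as [|h t IH]; intros [l [Hl Pl]]; [destruct Hl|].
  destruct (classic (exists l, In l t /\ P l)) as [Ht|Ht].
  - destruct (IH Ht) as (m & Hm & Pm & Mm).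
    destruct (classic (P h /\ m < h)) as [[Ph Hlt]|Hh].
    + exists h. split; [left; reflexivity|split; [exact Ph|]].
      intros l' [<-|Hl'] Pl'; [lra|]. specialize (Mm l' Hl' Pl'). lra.
    + exists m. split; [right; exact Hm|split; [exact Pm|]].
      intros l' [<-|Hl'] Pl'; [|auto]. apply Rnot_lt_le. intros Hlt. apply Hh. auto.
  - assert (Ph : P h) by (destruct Hl as [<-|Hl]; [exact Pl | exfalso; eauto]).
    exists h. split; [left; reflexivity|split; [exact Ph|]].
    intros l' [<-|Hl'] Pl'; [lra | exfalso; eauto].
Qed.

Lemma list_min_with (P : R -> Prop) L : (exists l, In l L /\ P l) ->
  exists m, In m L /\ P m /\ forall l, In l L -> P l -> m <= l.
Proof.
  intros [l [Hl Pl]].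
  destruct (list_max_with (fun l => P (- l)) (map Ropp L)) as (m & Hm & Pm & Mm).
  { exists (- l). rewrite in_map_iff, Ropp_involutive. eauto. }
  apply in_map_iff in Hm as [m' [<- Hm']]. rewrite Ropp_involutive in Pm.
  exists m'. split; [exact Hm'|split; [exact Pm|]].
  intros l' Hl' Pl'. specialize (Mm (- l') (in_map _ _ _ Hl')).
  rewrite Ropp_involutive in Mm. specialize (Mm Pl'). lra.
Qed.

Definition no_break_in (L : list R) (x y : R) : Prop := forall l, In l L -> ~ (x < l < y).

Record PL_breaks (a b : R) (f : R -> R) (L : list R) : Prop := {
  breaks_in : forall l, In l L -> in_Ztau l /\ a <= l <= b;
  breaks_lo : In a L;
  breaks_hi : In b L;
  breaks_affine : forall x y, a <= x -> x < y -> y <= b -> no_break_in L x y ->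
    exists k, forall z, x <= z <= y -> f z = f x + tpow k * (z - x);
  breaks_Ztau : forall z, a <= z <= b -> in_Ztau z -> in_Ztau (f z) }.

Definition PLmap (a b c d : R) (f : R -> R) : Prop :=
  a < b /\ f a = c /\ f b = d /\ exists L, PL_breaks a b f L.

Lemma PL_breaks_piece a b f L x : PL_breaks a b f L -> a <= x < b ->
  exists l1 l2 k, a <= l1 <= x /\ x < l2 <= b /\ in_Ztau l1 /\
    forall z, l1 <= z <= l2 -> f z = f l1 + tpow k * (z - l1).
Proof.
  intros [HL Ha Hb Hpc _] Hx.
  destruct (list_max_with (fun l => l <= x) L) as (l1 & H1 & P1 & M1).
  { exists a. split; [exact Ha | lra]. }
  destruct (list_min_with (fun l => x < l) L) as (l2 & H2 & P2 & M2).
  { exists b. split; [exact Hb | lra]. }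
  destruct (HL l1 H1) as [Z1 B1], (HL l2 H2) as [_ B2].
  destruct (Hpc l1 l2) as [k Hk]; try lra.
  { intros l Hl Hin. destruct (Rle_dec l x) as [Hlx|Hlx].
    - specialize (M1 l Hl Hlx). lra.
    - specialize (M2 l Hl ltac:(lra)). lra. }
  exists l1, l2, k. repeat split; auto; lra.
Qed.

(* Induction on a list [K] containing all breakpoints strictly between [x] and [y]:
   a breakpoint [k] in between splits [[x, y]] into two intervals handled by [K]. *)
Lemma PL_breaks_increasing a b f L x y : PL_breaks a b f L ->
  a <= x -> x < y -> y <= b -> f x < f y.
Proof.
  intros [_ _ _ Hpc _].
  assert (Hind : forall K x y, a <= x -> x < y -> y <= b ->
            (forall l, In l L -> x < l < y -> In l K) -> f x < f y).
  { induction K as [|k K IH]; intros u v Hu Huv Hv HK.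
    - assert (Hno : no_break_in L u v) by (intros l Hl Hin; exact (HK l Hl Hin)).
      destruct (Hpc u v Hu Huv Hv Hno) as [s Hs].
      rewrite (Hs v) by lra. pose proof (tpow_pos s). nra.
    - destruct (classic (u < k < v)) as [Hk|Hk].
      + apply Rlt_trans with (f k); apply IH; try lra;
          intros l Hl Hin; (destruct (HK l Hl ltac:(lra)) as [<-|]; [lra | assumption]).
      + apply IH; auto. intros l Hl Hin.
        destruct (HK l Hl Hin) as [<-|]; [contradiction | assumption]. }
  intros Hx Hxy Hy. apply (Hind L x y); auto.
Qed.

Lemma PL_breaks_le a b f L x y : PL_breaks a b f L ->
  a <= x -> x <= y -> y <= b -> f x <= f y.
Proof.
  intros HP Hx Hxy Hy. destruct (Req_dec x y) as [->|Hne]; [lra|].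
  left. apply (PL_breaks_increasing a b f L); auto; lra.
Qed.

Lemma PLmap_ext a b c d f g : (forall x, a <= x <= b -> f x = g x) ->
  PLmap a b c d f -> PLmap a b c d g.
Proof.
  intros E (Hab & Ha & Hb & L & [HL HaL HbL Hpc HZ]).
  split; [exact Hab|]. rewrite <- !E by lra. split; [exact Ha|split; [exact Hb|]].
  exists L. split; auto.
  - intros x y Hx Hxy Hy HnL. destruct (Hpc x y Hx Hxy Hy HnL) as [k Hk].
    exists k. intros z Hz. rewrite <- !E by lra. auto.
  - intros z Hz HZz. rewrite <- E by lra. auto.
Qed.

Lemma PLmap_restrict a b f L a' b' : PL_breaks a b f L -> a <= a' -> a' < b' -> b' <= b ->
  in_Ztau a' -> in_Ztau b' -> PLmap a' b' (f a') (f b') f.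
Proof.
  intros [HL Ha Hb Hpc HZ] H1 H2 H3 Z1 Z2.
  set (inside := fun l => if Rle_dec a' l then if Rle_dec l b' then true else false else false).
  assert (Hinside : forall l, inside l = true <-> a' <= l <= b').
  { intros l. unfold inside.
    destruct (Rle_dec a' l), (Rle_dec l b'); split; intros; try discriminate; auto; lra. }
  split; [exact H2|split; [reflexivity|split; [reflexivity|]]].
  exists (a' :: b' :: filter inside L). split.
  - intros l [<-|[<-|Hl]]; [split; [auto|lra] .. |].
    apply filter_In in Hl as [Hl Hi]. apply Hinside in Hi. split; [apply HL; auto | lra].
  - left. reflexivity.
  - right. left. reflexivity.
  - intros x y Hx Hxy Hy HnL. apply Hpc; try lra.
    intros l Hl Hin. apply (HnL l); [|lra].
    right. right. apply filter_In. split; [exact Hl|]. apply Hinside. lra.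
  - intros z Hz HZz. apply HZ; auto; lra.
Qed.

Definition glue (b : R) (f1 f2 : R -> R) : R -> R :=
  fun x => if Rle_dec x b then f1 x else f2 x.

Lemma glue_left b f1 f2 x : x <= b -> glue b f1 f2 x = f1 x.
Proof. intros. unfold glue. destruct (Rle_dec x b); [reflexivity | lra]. Qed.

Lemma glue_right b f1 f2 x : f1 b = f2 b -> b <= x -> glue b f1 f2 x = f2 x.
Proof.
  intros. unfold glue. destruct (Rle_dec x b); [|reflexivity]. replace x with b by lra. auto.
Qed.

Lemma PLmap_glue a b c d e h f1 f2 : PLmap a b c d f1 -> PLmap b e d h f2 ->
  PLmap a e c h (glue b f1 f2).
Proof.
  intros (Hab & Ha & Hb & L1 & [HL1 Ha1 Hb1 Hpc1 HZ1])
         (Hbe & Hb' & He & L2 & [HL2 Ha2 Hb2 Hpc2 HZ2]).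
  assert (Eb : f1 b = f2 b) by congruence.
  split; [lra|]. rewrite glue_left, glue_right by (auto; lra).
  split; [exact Ha|split; [exact He|]].
  exists (L1 ++ L2). split.
  - intros l Hl. apply in_app_or in Hl as [Hl|Hl].
    + destruct (HL1 l Hl). split; auto; lra.
    + destruct (HL2 l Hl). split; auto; lra.
  - apply in_or_app. auto.
  - apply in_or_app. auto.
  - intros x y Hx Hxy Hy HnL.
    assert (Hside : y <= b \/ b <= x).
    { destruct (Rle_dec y b); [left; assumption|]. destruct (Rle_dec b x); [right; assumption|].
      exfalso. apply (HnL b); [apply in_or_app; auto | lra]. }
    destruct Hside as [Hside|Hside].
    + destruct (Hpc1 x y) as [k Hk]; try lra.
      { intros l Hl. apply HnL, in_or_app. auto. }
      exists k. intros z Hz. rewrite !glue_left by lra. auto.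
    + destruct (Hpc2 x y) as [k Hk]; try lra.
      { intros l Hl. apply HnL, in_or_app. auto. }
      exists k. intros z Hz. rewrite !glue_right by (auto; lra). auto.
  - intros z Hz HZz. destruct (Rle_dec z b).
    + rewrite glue_left by lra. apply HZ1; auto; lra.
    + rewrite glue_right by (auto; lra). apply HZ2; auto; lra.
Qed.

Lemma tpow_affine_inv k u v x y : y = v + tpow k * (x - u) -> x = u + tpow (- k) * (y - v).
Proof.
  intros ->. replace (v + tpow k * (x - u) - v) with (tpow k * (x - u)) by ring.
  rewrite <- Rmult_assoc, tpow_opp_mul. ring.
Qed.

Lemma PLmap_inverse a b c d f g : PLmap a b c d f ->
  (forall x, a <= x <= b -> g (f x) = x) ->
  (forall y, c <= y <= d -> a <= g y <= b /\ f (g y) = y) -> PLmap c d a b g.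
Proof.
  intros (Hab & <- & <- & L & HP) Hgf Hfg.
  pose proof HP as [HL Ha Hb Hpc HZ].
  assert (Hmono : forall x y, a <= x -> x < y -> y <= b -> f x < f y)
    by (intros; eapply PL_breaks_increasing; eauto).
  assert (Hle : forall x y, a <= x -> x <= y -> y <= b -> f x <= f y)
    by (intros; eapply PL_breaks_le; eauto).
  assert (Hg_lt : forall y y', f a <= y -> y < y' -> y' <= f b -> g y < g y').
  { intros y y' Hy Hyy' Hy'. destruct (Hfg y), (Hfg y'); try lra.
    apply Rnot_le_lt. intros Hle'. pose proof (Hle (g y') (g y)). lra. }
  split; [apply Hmono; lra|].
  split; [apply Hgf; lra|]. split; [apply Hgf; lra|].
  exists (map f L). split.
  - intros l' Hl'. apply in_map_iff in Hl' as [l [<- Hl]]. destruct (HL l Hl).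
    split; [apply HZ; auto|split; apply Hle; lra].
  - apply in_map. exact Ha.
  - apply in_map. exact Hb.
  - intros x y Hx Hxy Hy HnL.
    pose proof (Hg_lt x y Hx Hxy Hy) as Hgxy.
    destruct (Hfg x) as [Hgx Hfgx], (Hfg y) as [Hgy Hfgy]; try lra.
    destruct (Hpc (g x) (g y)) as [k Hk]; try lra.
    { intros l Hl Hin. apply (HnL (f l)); [apply in_map; exact Hl|].
      destruct (HL l Hl). split.
      - rewrite <- Hfgx. apply Hmono; lra.
      - rewrite <- Hfgy. apply Hmono; lra. }
    exists (- k)%Z. intros w Hw. apply tpow_affine_inv. destruct (Hfg w) as [Hw1 Hw2]; [lra|].
    rewrite <- Hw2 at 1. rewrite <- Hfgx at 1. apply Hk.
    split; (destruct (Req_dec w x) as [->|]; [lra|]); (destruct (Req_dec w y) as [->|]; [lra|]);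
      left; apply Hg_lt; lra.
  - intros z Hz HZz. destruct (Hfg z Hz) as [Hgz Hfgz].
    destruct (Req_dec (g z) b) as [->|Hne]; [apply HL; exact Hb|].
    destruct (PL_breaks_piece a b f L (g z) HP ltac:(lra)) as (l1 & l2 & k & B1 & B2 & Z1 & Hk).
    rewrite (tpow_affine_inv k l1 (f l1) (g z) z); [|rewrite <- Hfgz at 1; apply Hk; lra].
    apply Ztau_add; [exact Z1|]. apply Ztau_mul; [apply Ztau_tpow|].
    apply Ztau_sub; [exact HZz|]. apply HZ; auto. lra.
Qed.

Definition PL_bij (a b c d : R) (f g : R -> R) : Prop :=
  PLmap a b c d f /\
  (forall x, a <= x <= b -> c <= f x <= d /\ g (f x) = x) /\
  (forall y, c <= y <= d -> a <= g y <= b /\ f (g y) = y).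

Lemma PL_bij_sym a b c d f g : PL_bij a b c d f g -> PL_bij c d a b g f.
Proof.
  intros (Hf & Hgf & Hfg). split; [|split; assumption].
  apply (PLmap_inverse a b c d f g Hf); [intros x Hx; apply Hgf, Hx | exact Hfg].
Qed.

Lemma PL_bij_ends a b c d f g : PL_bij a b c d f g -> f a = c /\ f b = d.
Proof. intros ((_ & Ha & Hb & _) & _). split; assumption. Qed.

Lemma PLmap_comp a b c d e h f f' g : PL_bij a b c d f f' -> PLmap c d e h g ->
  PLmap a b e h (comp g f).
Proof.
  intros Hbij (Hcd & Hc & Hd & Lg & [HLg Hcg Hdg Hpcg HZg]).
  pose proof Hbij as ((Hab & Ha & Hb & Lf & HPf) & Hf'f & Hff').
  pose proof HPf as [HLf Haf Hbf Hpcf HZf].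
  assert (Hmono : forall x y, a <= x -> x < y -> y <= b -> f x < f y)
    by (intros; eapply PL_breaks_increasing; eauto).
  unfold Defs.comp. split; [exact Hab|]. rewrite Ha, Hb. split; [exact Hc|split; [exact Hd|]].
  exists (Lf ++ map f' Lg). split.
  - intros l Hl. apply in_app_or in Hl as [Hl|Hl]; [apply HLf; exact Hl|].
    apply in_map_iff in Hl as [l0 [<- Hl0]]. destruct (HLg l0 Hl0) as [Z0 B0].
    destruct (Hff' l0 B0) as [B0' _]. split; [|exact B0'].
    destruct (PL_bij_sym a b c d f f' Hbij) as ((_ & _ & _ & Lf' & [_ _ _ _ HZf']) & _).
    apply HZf'; assumption.
  - apply in_or_app. left. exact Haf.
  - apply in_or_app. left. exact Hbf.
  - intros x y Hx Hxy Hy HnL.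
    destruct (Hpcf x y Hx Hxy Hy) as [ka Hka].
    { intros l Hl. apply HnL, in_or_app. left. exact Hl. }
    destruct (Hf'f x), (Hf'f y); try lra.
    pose proof (Hmono x y Hx Hxy Hy).
    destruct (Hpcg (f x) (f y)) as [kb Hkb]; try lra.
    { intros l Hl [Hl1 Hl2]. destruct (HLg l Hl) as [_ Bl]. destruct (Hff' l Bl) as [Bl' El].
      apply (HnL (f' l)); [apply in_or_app; right; apply in_map; exact Hl|].
      split; apply Rnot_le_lt; intros Hle.
      - destruct (Req_dec (f' l) x) as [E|E]; [rewrite <- El, E in Hl1; lra|].
        pose proof (Hmono (f' l) x ltac:(lra) ltac:(lra) ltac:(lra)). lra.
      - destruct (Req_dec (f' l) y) as [E|E]; [rewrite <- El, E in Hl2; lra|].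
        pose proof (Hmono y (f' l) ltac:(lra) ltac:(lra) ltac:(lra)). lra. }
    exists (kb + ka)%Z. intros z Hz.
    assert (f x <= f z <= f y).
    { split; (destruct (Req_dec x z) as [->|]; [lra|]); (destruct (Req_dec z y) as [->|]; [lra|]);
        left; apply Hmono; lra. }
    rewrite (Hkb (f z)), (Hka z), tpow_add by assumption. ring.
  - intros z Hz HZz. destruct (Hf'f z Hz) as [Bz _]. apply HZg; [exact Bz|]. apply HZf; assumption.
Qed.

Lemma PL_bij_glue a b c d e h f1 g1 f2 g2 : PL_bij a b c d f1 g1 -> PL_bij b e d h f2 g2 ->
  PL_bij a e c h (glue b f1 f2) (glue d g1 g2).
Proof.
  intros (P1 & B1 & C1) (P2 & B2 & C2).
  pose proof P1 as (Hab & Ha1 & Hb1 & _). pose proof P2 as (Hbe & Hb2 & He2 & _).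
  assert (Hf : f1 b = f2 b) by congruence.
  assert (Hg : g1 d = g2 d).
  { destruct (B1 b ltac:(lra)) as [_ E1]. destruct (B2 b ltac:(lra)) as [_ E2]. congruence. }
  destruct (B1 a ltac:(lra)) as [Hcd _]. destruct (B2 b ltac:(lra)) as [Hdh _].
  split; [exact (PLmap_glue a b c d e h f1 f2 P1 P2)|split].
  - intros x Hx. destruct (Rle_dec x b).
    + destruct (B1 x ltac:(lra)). rewrite !glue_left by lra. split; auto; lra.
    + destruct (B2 x ltac:(lra)). rewrite glue_right by (auto; lra).
      rewrite glue_right by (auto; lra). split; auto; lra.
  - intros y Hy. destruct (Rle_dec y d).
    + destruct (C1 y ltac:(lra)). rewrite !glue_left by lra. split; auto; lra.
    + destruct (C2 y ltac:(lra)). rewrite glue_right by (auto; lra).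
      rewrite glue_right by (auto; lra). split; auto; lra.
Qed.

Lemma PL_bij_affine a b c d k : a < b -> in_Ztau a -> in_Ztau b -> in_Ztau c ->
  d = c + tpow k * (b - a) ->
  PL_bij a b c d (fun x => c + tpow k * (x - a)) (fun y => a + tpow (- k) * (y - c)).
Proof.
  intros Hab Za Zb Zc Hd. pose proof (tpow_pos k). pose proof (tpow_pos (- k)).
  split; [split; [exact Hab|split; [ring|split; [symmetry; exact Hd|]]]|split].
  - exists (a :: b :: nil). split.
    + intros l [<-|[<-|[]]]; split; auto; lra.
    + left. reflexivity.
    + right. left. reflexivity.
    + intros x y _ _ _ _. exists k. intros z _. ring.
    + intros z _ HZ. apply Ztau_add; [exact Zc|].
      apply Ztau_mul; [apply Ztau_tpow | apply Ztau_sub; assumption].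
  - intros x Hx. split; [rewrite Hd; split; nra|].
    replace (c + tpow k * (x - a) - c) with (tpow k * (x - a)) by ring.
    rewrite <- Rmult_assoc, tpow_opp_mul. ring.
  - intros y Hy. split.
    2:{ replace (a + tpow (- k) * (y - c) - a) with (tpow (- k) * (y - c)) by ring.
        rewrite <- Rmult_assoc, (Rmult_comm (tpow k)), tpow_opp_mul. ring. }
    assert (Hy' : y - c <= tpow k * (b - a)) by lra.
    apply (Rmult_le_compat_l (tpow (- k))) in Hy'; [|lra].
    rewrite <- Rmult_assoc, tpow_opp_mul in Hy'. split; nra.
Qed.

Lemma PL_bij_id a b : a < b -> in_Ztau a -> in_Ztau b -> PL_bij a b a b (fun x => x) (fun x => x).
Proof.
  intros Hab Za Zb. split; [split; [exact Hab|split; [reflexivity|split; [reflexivity|]]]|].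
  - exists (a :: b :: nil). split.
    + intros l [<-|[<-|[]]]; split; auto; lra.
    + left. reflexivity.
    + right. left. reflexivity.
    + intros x y _ _ _ _. exists 0%Z. intros z _. unfold tpow. simpl. ring.
    + intros z _ HZ. exact HZ.
  - split; intros; split; auto; lra.
Qed.

Lemma PL_bij_sum_tpow E F a c : length E = length F -> E <> nil -> in_Ztau a -> in_Ztau c ->
  exists f g, PL_bij a (a + sum_tpow E) c (c + sum_tpow F) f g.
Proof.
  revert F a c. induction E as [|e E IH]; intros F a c Hlen HE Za Zc; [congruence|].
  destruct F as [|h F]; [discriminate|].
  pose proof (tpow_pos e).
  assert (Hpiece : PL_bij a (a + tpow e) c (c + tpow h)
            (fun x => c + tpow (h - e) * (x - a)) (fun y => a + tpow (- (h - e)) * (y - c))).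
  { apply PL_bij_affine; try lra; auto.
    - apply Ztau_add; [exact Za | apply Ztau_tpow].
    - replace (a + tpow e - a) with (tpow e) by ring. rewrite <- tpow_add.
      replace (h - e + e)%Z with h by lia. reflexivity. }
  destruct E as [|e' E].
  - destruct F; [|discriminate]. simpl. rewrite !Rplus_0_r. eauto.
  - destruct (IH F (a + tpow e) (c + tpow h)) as (f2 & g2 & B2); try (simpl in *; congruence || lia);
      try (apply Ztau_add; [assumption | apply Ztau_tpow]).
    exists (glue (a + tpow e) (fun x => c + tpow (h - e) * (x - a)) f2),
           (glue (c + tpow h) (fun y => a + tpow (- (h - e)) * (y - c)) g2).
    replace (a + sum_tpow (e :: e' :: E)) with (a + tpow e + sum_tpow (e' :: E)) by (simpl; ring).
    replace (c + sum_tpow (h :: F)) with (c + tpow h + sum_tpow F) by (simpl; ring).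
    apply PL_bij_glue; assumption.
Qed.

(* Split [b - a] and [d - c] into the same number of powers of tau and match the pieces
   by affine maps. *)
Lemma PL_bij_exists a b c d : a < b -> c < d ->
  in_Ztau a -> in_Ztau b -> in_Ztau c -> in_Ztau d -> exists f g, PL_bij a b c d f g.
Proof.
  intros Hab Hcd Za Zb Zc Zd.
  destruct (Ztau_pos_sum_tpow (b - a)) as (E & HE & Eab); [apply Ztau_sub; assumption | lra|].
  destruct (Ztau_pos_sum_tpow (d - c)) as (F & HF & Ecd); [apply Ztau_sub; assumption | lra|].
  destruct (sum_tpow_lengthen (length F) E HE) as (E' & HE'1 & HE'2).
  destruct (sum_tpow_lengthen (length E) F HF) as (F' & HF'1 & HF'2).
  destruct (PL_bij_sum_tpow E' F' a c) as (f & g & B); auto; [lia| |].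
  { intros ->. destruct E; [congruence | simpl in HE'1; lia]. }
  exists f, g. replace b with (a + sum_tpow E') by lra. replace d with (c + sum_tpow F') by lra.
  exact B.
Qed.

(** * Elements of F_tau *)

Definition PL01 (f : R -> R) : Prop :=
  (forall x, x < 0 \/ 1 < x -> f x = x) /\ PLmap 0 1 0 1 f.

Section Subdivision.

Variables (n : nat) (p : nat -> R).
Hypothesis p_incr : forall i, (i < n)%nat -> p i < p (S i).

Lemma subdivision_le i j : (i <= j <= n)%nat -> p i <= p j.
Proof.
  induction j as [|j IH]; intros Hij; [replace i with 0%nat by lia; lra|].
  destruct (Nat.eq_dec i (S j)) as [->|Hne]; [lra|].
  pose proof (p_incr j ltac:(lia)). pose proof (IH ltac:(lia)). lra.
Qed.

Lemma subdivision_locate x : p 0%nat <= x < p n ->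
  exists i, (i < n)%nat /\ p i <= x < p (S i).
Proof.
  intros Hx.
  assert (Hfrom : forall k j, (n - j = k)%nat -> (j <= n)%nat -> p j <= x ->
            exists i, (i < n)%nat /\ p i <= x < p (S i)).
  { induction k as [|k IH]; intros j Hk Hj Hpj.
    - replace j with n in Hpj by lia. lra.
    - destruct (Rlt_dec x (p (S j))); [exists j; split; [lia | lra]|].
      apply (IH (S j)); [lia | lia | lra]. }
  apply (Hfrom n 0%nat); [lia | lia | lra].
Qed.

End Subdivision.

Lemma In_map_seq (p : nat -> R) n l : In l (map p (seq 0 (S n))) <-> exists i, (i <= n)%nat /\ l = p i.
Proof.
  rewrite in_map_iff. split.
  - intros [i [<- Hi]]. apply in_seq in Hi. exists i. split; [lia | reflexivity].
  - intros [i [Hi ->]]. exists i. split; [reflexivity|]. apply in_seq. lia.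
Qed.

Lemma PL01_of_in_Ftau f : in_Ftau f -> PL01 f.
Proof.
  intros (Hout & F0 & F1 & n & p & P0 & Pn & Pinc & PZ & Ppc).
  assert (Pb : forall i, (i <= n)%nat -> 0 <= p i <= 1).
  { intros i Hi. rewrite <- P0, <- Pn. split; apply (subdivision_le n p Pinc); lia. }
  assert (FZ : forall i, (i <= n)%nat -> in_Ztau (f (p i))).
  { induction i as [|i IH]; intros Hi; [rewrite P0, F0; apply Ztau_0|].
    destruct (Ppc i ltac:(lia)) as [k Hk]. pose proof (Pinc i ltac:(lia)).
    rewrite Hk by lra. apply Ztau_add; [apply IH; lia|].
    apply Ztau_mul; [apply Ztau_tpow | apply Ztau_sub; apply PZ; lia]. }
  split; [exact Hout|]. split; [lra|split; [exact F0|split; [exact F1|]]].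
  exists (map p (seq 0 (S n))). split.
  - intros l Hl. apply In_map_seq in Hl as [i [Hi ->]]. split; auto.
  - apply In_map_seq. exists 0%nat. split; [lia | auto].
  - apply In_map_seq. exists n. split; [lia | auto].
  - intros x y Hx Hxy Hy HnL.
    destruct (subdivision_locate n p x ltac:(lra)) as [i [Hi [Hi1 Hi2]]].
    assert (y <= p (S i)).
    { apply Rnot_lt_le. intros Hlt. apply (HnL (p (S i))); [|lra].
      apply In_map_seq. exists (S i). split; [lia | reflexivity]. }
    destruct (Ppc i Hi) as [k Hk]. exists k. intros z Hz.
    rewrite (Hk z), (Hk x) by lra. unfold tpow. ring.
  - intros z Hz HZz. destruct (Req_dec z 1) as [->|Hz1]; [rewrite F1; apply Ztau_1|].
    destruct (subdivision_locate n p z ltac:(lra)) as [i [Hi [Hi1 Hi2]]].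
    destruct (Ppc i Hi) as [k Hk]. rewrite Hk by lra.
    apply Ztau_add; [apply FZ; lia|].
    apply Ztau_mul; [apply Ztau_tpow | apply Ztau_sub; [exact HZz | apply PZ; lia]].
Qed.

Definition count_above (L : list R) (y : R) : nat :=
  length (filter (fun l => if Rlt_dec y l then true else false) L).

Lemma count_above_le L y m : y <= m -> (count_above L m <= count_above L y)%nat.
Proof.
  intros Hym. induction L as [|l L IH]; unfold count_above in *; simpl; [lia|].
  destruct (Rlt_dec m l), (Rlt_dec y l); simpl; lia || lra.
Qed.

Lemma count_above_lt L y m : y < m -> In m L -> (count_above L m < count_above L y)%nat.
Proof.
  intros Hym Hm. induction L as [|l L IH]; [destruct Hm|]. unfold count_above in *; simpl.
  destruct Hm as [<-|Hm].
  - pose proof (count_above_le L y l ltac:(lra)). unfold count_above in *.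
    destruct (Rlt_dec l l); [lra|]. destruct (Rlt_dec y l); [simpl; lia | lra].
  - specialize (IH Hm). destruct (Rlt_dec m l), (Rlt_dec y l); simpl; lia || lra.
Qed.

Lemma list_chain_up (L : list R) b x : In b L -> (forall l, In l L -> l <= b) -> In x L ->
  exists m p, p 0%nat = x /\ p m = b /\
    (forall i, (i < m)%nat -> p i < p (S i) /\ no_break_in L (p i) (p (S i))) /\
    (forall i, (i <= m)%nat -> In (p i) L).
Proof.
  intros Hb Hmax. remember (count_above L x) as N eqn:HN. revert x HN.
  induction N as [N IH] using lt_wf_ind. intros x HN Hx.
  destruct (Req_dec x b) as [->|Hxb].
  { exists 0%nat, (fun _ => b). repeat split; intros; auto; lia. }
  pose proof (Hmax x Hx).
  destruct (list_min_with (fun l => x < l) L) as (m & Hm & Pm & Mm); [exists b; split; [auto | lra]|].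
  destruct (IH (count_above L m)) with (x := m) as (k & p & P0 & Pk & Pinc & PIn); auto.
  { subst N. apply count_above_lt; auto. }
  exists (S k), (fun i => match i with O => x | S j => p j end).
  split; [reflexivity|split; [exact Pk|split]].
  - intros [|i] Hi; [|apply Pinc; lia].
    rewrite P0. split; [exact Pm|]. intros l Hl [H1 H2]. specialize (Mm l Hl H1). lra.
  - intros [|i] Hi; [exact Hx | apply PIn; lia].
Qed.

Lemma in_Ftau_of_PL01 f : PL01 f -> in_Ftau f.
Proof.
  intros (Hout & _ & F0 & F1 & L & HP). pose proof HP as [HL Ha Hb Hpc _].
  split; [exact Hout|split; [exact F0|split; [exact F1|]]].
  destruct (list_chain_up L 1 0 Hb (fun l Hl => proj2 (proj2 (HL l Hl))) Ha)
    as (m & p & P0 & Pm & Pinc & PIn).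
  exists m, p. split; [exact P0|split; [exact Pm|split; [|split]]].
  - intros i Hi. apply Pinc, Hi.
  - intros i Hi. apply (HL _ (PIn i Hi)).
  - intros i Hi. destruct (Pinc i Hi) as [H1 H2].
    destruct (HL _ (PIn i ltac:(lia))) as [_ B1], (HL _ (PIn (S i) ltac:(lia))) as [_ B2].
    destruct (Hpc (p i) (p (S i))) as [k Hk]; try lra; [exact H2|].
    exists k. exact Hk.
Qed.

Lemma in_Ftau_iff f : in_Ftau f <-> PL01 f.
Proof. split; [apply PL01_of_in_Ftau | apply in_Ftau_of_PL01]. Qed.

Lemma Ftau_0 f : in_Ftau f -> f 0 = 0.
Proof. intros (_ & H & _). exact H. Qed.

Lemma Ftau_1 f : in_Ftau f -> f 1 = 1.
Proof. intros (_ & _ & H & _). exact H. Qed.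

Lemma Ftau_outside f x : in_Ftau f -> x < 0 \/ 1 < x -> f x = x.
Proof. intros (H & _). apply H. Qed.

Lemma Ftau_breaks f : in_Ftau f -> exists L, PL_breaks 0 1 f L.
Proof. intros Hf. apply in_Ftau_iff in Hf as (_ & _ & _ & _ & HL). exact HL. Qed.

Lemma Ftau_unit f x : in_Ftau f -> 0 <= x <= 1 -> 0 <= f x <= 1.
Proof.
  intros Hf Hx. destruct (Ftau_breaks f Hf) as [L HL].
  rewrite <- (Ftau_0 f Hf), <- (Ftau_1 f Hf) at 1.
  split; apply (PL_breaks_le 0 1 f L); auto; lra.
Qed.

Lemma Ftau_increasing f x y : in_Ftau f -> x < y -> f x < f y.
Proof.
  intros Hf Hxy. destruct (Ftau_breaks f Hf) as [L HL].
  destruct (Rlt_dec x 0) as [Hx|Hx]; [|destruct (Rle_dec x 1) as [Hx'|Hx']].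
  - rewrite (Ftau_outside f x) by auto.
    destruct (Rle_dec y 1); [|rewrite (Ftau_outside f y) by (auto; lra); lra].
    destruct (Rlt_dec y 0); [rewrite (Ftau_outside f y) by auto; lra|].
    pose proof (Ftau_unit f y Hf ltac:(lra)). lra.
  - destruct (Rle_dec y 1); [apply (PL_breaks_increasing 0 1 f L); auto; lra|].
    rewrite (Ftau_outside f y) by (auto; lra). pose proof (Ftau_unit f x Hf ltac:(lra)). lra.
  - rewrite !(Ftau_outside f) by (auto; lra). exact Hxy.
Qed.

Lemma Ftau_le f x y : in_Ftau f -> x <= y -> f x <= f y.
Proof.
  intros Hf Hxy. destruct (Req_dec x y) as [->|]; [lra|]. left. apply Ftau_increasing; auto; lra.
Qed.

Lemma Ftau_inj f x y : in_Ftau f -> f x = f y -> x = y.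
Proof.
  intros Hf E. destruct (Rtotal_order x y) as [H|[H|H]]; auto;
    apply (Ftau_increasing f) in H; auto; lra.
Qed.

Lemma Ftau_pos f x : in_Ftau f -> 0 < x -> 0 < f x.
Proof. intros Hf Hx. rewrite <- (Ftau_0 f Hf). apply Ftau_increasing; assumption. Qed.

Lemma Ftau_lt_1 f x : in_Ftau f -> x < 1 -> f x < 1.
Proof. intros Hf Hx. rewrite <- (Ftau_1 f Hf). apply Ftau_increasing; assumption. Qed.

Lemma Ftau_Ztau f z : in_Ftau f -> in_Ztau z -> in_Ztau (f z).
Proof.
  intros Hf Hz. destruct (Ftau_breaks f Hf) as [L [_ _ _ _ HZ]].
  destruct (Rlt_dec z 0); [rewrite Ftau_outside; auto|].
  destruct (Rlt_dec 1 z); [rewrite Ftau_outside; auto|].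
  apply HZ; [lra | exact Hz].
Qed.

Lemma inverse_of_l f' f x : inverse_of f' f -> f' (f x) = x.
Proof. intros [_ H]. exact (equal_f H x). Qed.

Lemma inverse_of_r f' f x : inverse_of f' f -> f (f' x) = x.
Proof. intros [H _]. exact (equal_f H x). Qed.

Lemma inverse_of_sym f' f : inverse_of f' f -> inverse_of f f'.
Proof. intros [H1 H2]. split; assumption. Qed.

Lemma inverse_of_intro f' f : (forall x, f' (f x) = x) -> (forall x, f (f' x) = x) ->
  inverse_of f' f.
Proof.
  intros H1 H2. split; apply functional_extensionality; intro x; unfold Defs.comp, idR; auto.
Qed.

Lemma Ftau_inverse f f' : in_Ftau f -> inverse_of f' f -> in_Ftau f'.
Proof.
  intros Hf HI. pose proof Hf as Hf'. apply in_Ftau_iff in Hf' as (Hout & PLf).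
  apply in_Ftau_iff. split.
  - intros x Hx. rewrite <- (Hout x Hx) at 1. apply inverse_of_l, HI.
  - apply (PLmap_inverse 0 1 0 1 f f' PLf); [intros; apply inverse_of_l, HI|].
    intros y Hy. split; [|apply inverse_of_r, HI].
    split; apply Rnot_lt_le; intros Hlt.
    + rewrite <- (Hout (f' y)), inverse_of_r in Hlt by auto. lra.
    + rewrite <- (Hout (f' y)), inverse_of_r in Hlt by auto. lra.
Qed.

Definition Ftau_pair (f f' : R -> R) : Prop := in_Ftau f /\ in_Ftau f' /\ inverse_of f' f.

Lemma Ftau_pair_of f f' : in_Ftau f -> inverse_of f' f -> Ftau_pair f f'.
Proof. intros Hf HI. split; [exact Hf|split; [apply (Ftau_inverse f); auto | exact HI]]. Qed.

Lemma Ftau_pair_sym f f' : Ftau_pair f f' -> Ftau_pair f' f.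
Proof. intros (Hf & Hf' & HI). split; [exact Hf'|split; [exact Hf | apply inverse_of_sym, HI]]. Qed.

Lemma Ftau_pair_PL_bij f f' a b : Ftau_pair f f' -> 0 <= a -> a < b -> b <= 1 ->
  in_Ztau a -> in_Ztau b -> PL_bij a b (f a) (f b) f f'.
Proof.
  intros (Hf & Hf' & HI) H1 H2 H3 Za Zb. destruct (Ftau_breaks f Hf) as [L HL].
  split; [apply (PLmap_restrict 0 1 f L); auto|split].
  - intros x Hx. split; [split; apply Ftau_le; auto; lra | apply inverse_of_l, HI].
  - intros y Hy. split; [|apply inverse_of_r, HI].
    rewrite <- (inverse_of_l f' f a), <- (inverse_of_l f' f b) by exact HI.
    split; apply Ftau_le; auto; lra.
Qed.

Lemma Ftau_comp f g g' : in_Ftau f -> Ftau_pair g g' -> in_Ftau (comp f g).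
Proof.
  intros Hf Hg. pose proof Hg as (Hg1 & _). apply in_Ftau_iff. split.
  - intros x Hx. unfold Defs.comp. rewrite (Ftau_outside g x), (Ftau_outside f x) by auto. reflexivity.
  - apply in_Ftau_iff in Hf as (_ & PLf).
    pose proof (Ftau_pair_PL_bij g g' 0 1 Hg ltac:(lra) ltac:(lra) ltac:(lra) Ztau_0 Ztau_1) as B.
    rewrite Ftau_0, Ftau_1 in B by exact Hg1. exact (PLmap_comp _ _ _ _ _ _ g g' f B PLf).
Qed.

Lemma Ftau_pair_comp f f' g g' : Ftau_pair f f' -> Ftau_pair g g' ->
  Ftau_pair (comp f g) (comp g' f').
Proof.
  intros Hf Hg. pose proof Hf as (Hf1 & Hf2 & HIf). pose proof Hg as (Hg1 & Hg2 & HIg).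
  split; [exact (Ftau_comp f g g' Hf1 Hg)|].
  split; [exact (Ftau_comp g' f' f Hg2 (Ftau_pair_sym _ _ Hf))|].
  apply inverse_of_intro; intros x; unfold Defs.comp.
  - rewrite (inverse_of_l f' f) by exact HIf. apply inverse_of_l, HIg.
  - rewrite (inverse_of_r g' g) by exact HIg. apply inverse_of_r, HIf.
Qed.

Lemma in_Ftau_id : in_Ftau idR.
Proof.
  apply in_Ftau_iff. split; [reflexivity|].
  exact (proj1 (PL_bij_id 0 1 ltac:(lra) Ztau_0 Ztau_1)).
Qed.

Lemma Ftau_pair_id : Ftau_pair idR idR.
Proof. apply Ftau_pair_of; [exact in_Ftau_id | apply inverse_of_intro; reflexivity]. Qed.

Definition extend_by_id (f : R -> R) : R -> R :=
  fun x => if Rle_dec 0 x then if Rle_dec x 1 then f x else x else x.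

Lemma extend_by_id_in f x : 0 <= x <= 1 -> extend_by_id f x = f x.
Proof.
  intros. unfold extend_by_id. destruct (Rle_dec 0 x); [|lra].
  destruct (Rle_dec x 1); [reflexivity | lra].
Qed.

Lemma extend_by_id_out f x : x < 0 \/ 1 < x -> extend_by_id f x = x.
Proof.
  intros. unfold extend_by_id. destruct (Rle_dec 0 x); [|reflexivity].
  destruct (Rle_dec x 1); [lra | reflexivity].
Qed.

Lemma Ftau_pair_of_PL_bij f g : PL_bij 0 1 0 1 f g -> Ftau_pair (extend_by_id f) (extend_by_id g).
Proof.
  intros B. pose proof B as (P & Bfg & Bgf). pose proof (PL_bij_sym _ _ _ _ _ _ B) as (Q & _).
  assert (Hext : forall h, PLmap 0 1 0 1 h -> in_Ftau (extend_by_id h)).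
  { intros h Ph. apply in_Ftau_iff. split; [intros; apply extend_by_id_out; auto|].
    apply (PLmap_ext 0 1 0 1 h); [|exact Ph]. intros. rewrite extend_by_id_in; auto. }
  split; [apply Hext, P|split; [apply Hext, Q|]].
  apply inverse_of_intro; intros x; (destruct (classic (0 <= x <= 1)) as [Hx|Hx];
    [|rewrite !(extend_by_id_out _ x) by lra; reflexivity]).
  - destruct (Bfg x Hx) as [Hfx E].
    rewrite (extend_by_id_in f x), (extend_by_id_in g) by lra. exact E.
  - destruct (Bgf x Hx) as [Hgx E].
    rewrite (extend_by_id_in g x), (extend_by_id_in f) by lra. exact E.
Qed.

(** * Supports *)

Definition supp_in (u : R -> R) (c d : R) : Prop := forall x, x < c \/ d < x -> u x = x.

Lemma supp_in_inverse u u' c d : supp_in u c d -> inverse_of u' u -> supp_in u' c d.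
Proof. intros Hu HI x Hx. rewrite <- (Hu x Hx) at 1. apply inverse_of_l, HI. Qed.

Lemma fixes_outside_stable u (S : R -> Prop) x : in_Ftau u -> (forall y, ~ S y -> u y = y) ->
  S x -> S (u x).
Proof.
  intros Hu Hs Hx. apply NNPP. intros Hux.
  assert (E : u (u x) = u x) by (apply Hs, Hux).
  apply (Ftau_inj u) in E; [|exact Hu]. rewrite E in Hux. contradiction.
Qed.

Lemma supp_in_stable u c d x : in_Ftau u -> supp_in u c d -> c <= x <= d -> c <= u x <= d.
Proof.
  intros Hu Hs. apply (fixes_outside_stable u (fun x => c <= x <= d)); [exact Hu|].
  intros y Hy. apply Hs. lra.
Qed.

Lemma disjoint_supports_comm u v (S T : R -> Prop) : in_Ftau u -> in_Ftau v ->
  (forall x, ~ S x -> u x = x) -> (forall x, ~ T x -> v x = x) -> (forall x, S x -> ~ T x) ->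
  comp u v = comp v u.
Proof.
  intros Hu Hv Su Tv HST. apply functional_extensionality. intros x. unfold Defs.comp.
  destruct (classic (S x)) as [Sx|Sx].
  - pose proof (fixes_outside_stable u S x Hu Su Sx).
    rewrite (Tv x), (Tv (u x)) by auto. reflexivity.
  - rewrite (Su x) by exact Sx. destruct (classic (T x)) as [Tx|Tx].
    + pose proof (fixes_outside_stable v T x Hv Tv Tx).
      rewrite Su; [reflexivity|]. intros HS. exact (HST _ HS ltac:(assumption)).
    + rewrite (Tv x), (Su x) by assumption. reflexivity.
Qed.

Lemma conj_local u v v' w w' c d : in_Ftau u -> supp_in u c d ->
  Ftau_pair v v' -> Ftau_pair w w' -> c <= d ->
  (forall x, v' c <= x <= v' d -> w x = v x) -> comp v' (comp u v) = comp w' (comp u w).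
Proof.
  intros HU Hu (V1 & V2 & VI) (W1 & W2 & WI) Hcd Hag.
  apply functional_extensionality. intros x. unfold Defs.comp.
  assert (Mv : forall y, c <= y <= d -> v' c <= v' y <= v' d)
    by (intros; split; apply Ftau_le; auto; lra).
  assert (Hv_in : forall y, v' c <= y <= v' d -> c <= v y <= d).
  { intros y Hy. rewrite <- (inverse_of_r v' v c), <- (inverse_of_r v' v d) by exact VI.
    split; apply Ftau_le; auto; lra. }
  destruct (classic (v' c <= x <= v' d)) as [Hx|Hx].
  - rewrite Hag by exact Hx.
    pose proof (supp_in_stable u c d (v x) HU Hu (Hv_in x Hx)) as Huv.
    rewrite <- (inverse_of_r v' v (u (v x))) at 2 by exact VI.
    rewrite <- (Hag (v' (u (v x)))) by (apply Mv; exact Huv). symmetry. apply inverse_of_l, WI.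
  - assert (Hvx : ~ (c <= v x <= d)).
    { intros Hc. apply Hx. rewrite <- (inverse_of_l v' v x) by exact VI. apply Mv, Hc. }
    rewrite (Hu (v x)), (inverse_of_l v' v) by (exact VI || lra).
    assert (Hwx : ~ (c <= w x <= d)).
    { intros Hc. pose proof (Mv (w x) Hc) as Hz.
      assert (E : w (v' (w x)) = w x) by (rewrite Hag by exact Hz; apply inverse_of_r, VI).
      apply (Ftau_inj w) in E; [|exact W1]. rewrite E in Hz. contradiction. }
    rewrite (Hu (w x)), (inverse_of_l w' w) by (exact WI || lra). reflexivity.
Qed.

(** * Constructing elements of F_tau *)

Lemma Ftau_two_points c d j1 j2 : 0 < c -> c < d -> d < 1 -> 0 < j1 -> j1 < j2 -> j2 < 1 ->
  in_Ztau c -> in_Ztau d -> in_Ztau j1 -> in_Ztau j2 ->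
  exists r r', Ftau_pair r r' /\ r c = j1 /\ r d = j2.
Proof.
  intros H1 H2 H3 H4 H5 H6 Zc Zd Z1 Z2.
  destruct (PL_bij_exists 0 c 0 j1) as (f1 & g1 & B1); auto using Ztau_0.
  destruct (PL_bij_exists c d j1 j2) as (f2 & g2 & B2); auto.
  destruct (PL_bij_exists d 1 j2 1) as (f3 & g3 & B3); auto using Ztau_1.
  pose proof (PL_bij_ends _ _ _ _ _ _ B1) as [_ E1].
  pose proof (PL_bij_ends _ _ _ _ _ _ B2) as [E2 E3].
  eexists; eexists; split;
    [exact (Ftau_pair_of_PL_bij _ _ (PL_bij_glue _ _ _ _ _ _ _ _ _ _
              (PL_bij_glue _ _ _ _ _ _ _ _ _ _ B1 B2) B3))|].
  rewrite !extend_by_id_in by lra. split.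
  - rewrite !glue_left by lra. exact E1.
  - rewrite glue_left, glue_right by (congruence || lra). exact E3.
Qed.

Lemma Ftau_cutoff f f' d1 a b d2 : Ftau_pair f f' ->
  0 < d1 -> d1 < a -> a < b -> b < d2 -> d2 < 1 ->
  in_Ztau d1 -> in_Ztau a -> in_Ztau b -> in_Ztau d2 -> d1 < f a -> f b < d2 ->
  exists g g', Ftau_pair g g' /\ (forall x, a <= x <= b -> g x = f x) /\
    (forall x, x <= d1 \/ d2 <= x -> g x = x).
Proof.
  intros Hf H1 H2 H3 H4 H5 Z1 Za Zb Z2 Ha Hb. pose proof Hf as (Hf1 & _).
  assert (Zfa : in_Ztau (f a)) by (apply Ftau_Ztau; auto).
  assert (Zfb : in_Ztau (f b)) by (apply Ftau_Ztau; auto).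
  assert (Hfab : f a < f b) by (apply Ftau_increasing; auto).
  pose proof (PL_bij_id 0 d1 H1 Ztau_0 Z1) as B1.
  destruct (PL_bij_exists d1 a d1 (f a)) as (i1 & j1 & B2); auto.
  pose proof (Ftau_pair_PL_bij f f' a b Hf ltac:(lra) H3 ltac:(lra) Za Zb) as B3.
  destruct (PL_bij_exists b d2 (f b) d2) as (i2 & j2 & B4); auto.
  pose proof (PL_bij_id d2 1 H5 Z2 Ztau_1) as B5.
  pose proof (PL_bij_ends _ _ _ _ _ _ B2) as [E2 E2'].
  pose proof (PL_bij_ends _ _ _ _ _ _ B4) as [E4 E4'].
  pose proof (PL_bij_glue _ _ _ _ _ _ _ _ _ _
               (PL_bij_glue _ _ _ _ _ _ _ _ _ _
                 (PL_bij_glue _ _ _ _ _ _ _ _ _ _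
                   (PL_bij_glue _ _ _ _ _ _ _ _ _ _ B1 B2) B3) B4) B5) as B.
  eexists; eexists; split; [exact (Ftau_pair_of_PL_bij _ _ B)|].
  set (F1 := glue d1 (fun x => x) i1) in B.
  assert (EF1 : F1 a = f a) by (unfold F1; rewrite glue_right by (auto || lra); exact E2').
  set (F2 := glue a F1 f) in B.
  assert (EF2 : forall x, a <= x -> F2 x = f x) by (intros; unfold F2; apply glue_right; auto).
  set (F3 := glue b F2 i2) in B.
  assert (EF3 : F3 d2 = d2) by (unfold F3; rewrite glue_right by (rewrite ?EF2; auto; lra); exact E4').
  split.
  - intros x Hx. rewrite extend_by_id_in by lra.
    rewrite glue_left by lra. unfold F3. rewrite glue_left by lra. apply EF2. lra.
  - intros x Hx. destruct (classic (0 <= x <= 1)) as [H01|H01]; [|apply extend_by_id_out; lra].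
    rewrite extend_by_id_in by exact H01. destruct Hx as [Hx|Hx].
    + rewrite glue_left by lra. unfold F3, F2, F1. rewrite !glue_left by lra. reflexivity.
    + apply glue_right; [exact EF3 | exact Hx].
Qed.


Lemma Ftau_localize h h' c d : Ftau_pair h h' -> 0 < c -> c <= d -> d < 1 ->
  exists g g' d1 d2, Ftau_pair g g' /\ 0 < d1 /\ d1 < c /\ d < d2 /\ d2 < 1 /\
    in_Ztau d1 /\ in_Ztau d2 /\ (forall x, c <= x <= d -> g x = h x) /\ supp_in g d1 d2.
Proof.
  intros Hh Hc Hcd Hd. pose proof Hh as (Hh1 & _).
  destruct (Ztau_dense 0 c Hc) as (a & Za & Ha).
  destruct (Ztau_dense d 1 Hd) as (b & Zb & Hb).
  pose proof (Ftau_pos h a Hh1 ltac:(lra)). pose proof (Ftau_lt_1 h b Hh1 ltac:(lra)).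
  destruct (Ztau_dense 0 (Rmin a (h a))) as (d1 & Z1 & H1); [apply Rmin_glb_lt; lra|].
  destruct (Ztau_dense (Rmax b (h b)) 1) as (d2 & Z2 & H2); [apply Rmax_lub_lt; lra|].
  pose proof (Rmin_l a (h a)). pose proof (Rmin_r a (h a)).
  pose proof (Rmax_l b (h b)). pose proof (Rmax_r b (h b)).
  destruct (Ftau_cutoff h h' d1 a b d2) as (g & g' & Hg & Hgh & Hgid); auto; try lra.
  exists g, g', d1, d2. split; [exact Hg|]. repeat split; auto; try lra.
  - intros x Hx. apply Hgh. lra.
  - intros x Hx. apply Hgid. lra.
Qed.

(** * Germs at the endpoints *)

Definition germ0 (f : R -> R) (s e : R) : Prop := 0 < e /\ forall x, 0 <= x <= e -> f x = s * x.

Definition reflect (f : R -> R) : R -> R := fun x => 1 - f (1 - x).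

Definition germ1 (f : R -> R) (s e : R) : Prop := germ0 (reflect f) s e.

Lemma germ0_comp f g s1 s2 e1 e2 : germ0 f s1 e1 -> germ0 g s2 e2 -> 0 < s2 ->
  germ0 (comp f g) (s1 * s2) (Rmin e2 (e1 / s2)).
Proof.
  intros [He1 H1] [He2 H2] Hs.
  split; [apply Rmin_glb_lt; [exact He2 | apply Rdiv_lt_0_compat; assumption]|].
  intros x Hx. pose proof (Rmin_l e2 (e1 / s2)). pose proof (Rmin_r e2 (e1 / s2)).
  assert (Hsx : s2 * x <= e1).
  { apply (Rmult_le_reg_r (/ s2)); [apply Rinv_0_lt_compat; exact Hs|].
    replace (s2 * x * / s2) with x by (field; lra). unfold Rdiv in *. lra. }
  unfold Defs.comp. rewrite H2, H1 by (split; nra || lra). ring.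
Qed.

Lemma germ0_inv f f' s e : germ0 f s e -> 0 < s -> inverse_of f' f -> germ0 f' (/ s) (s * e).
Proof.
  intros [He H] Hs HI. split; [nra|]. intros y Hy.
  assert (Hys : 0 <= y / s <= e).
  { split; [unfold Rdiv; apply Rmult_le_pos; [lra | left; apply Rinv_0_lt_compat, Hs]|].
    apply (Rmult_le_reg_l s); [exact Hs|].
    replace (s * (y / s)) with y by (field; lra). lra. }
  replace (/ s * y) with (y / s) by (field; lra).
  rewrite <- (inverse_of_l f' f (y / s)) by exact HI. rewrite H by exact Hys.
  f_equal. field. lra.
Qed.

Lemma reflect_comp f g : reflect (comp f g) = comp (reflect f) (reflect g).
Proof.
  apply functional_extensionality. intros x. unfold reflect, Defs.comp.
  replace (1 - (1 - g (1 - x))) with (g (1 - x)) by ring. reflexivity.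
Qed.

Lemma reflect_inverse f' f : inverse_of f' f -> inverse_of (reflect f') (reflect f).
Proof.
  intros HI. apply inverse_of_intro; intros x; unfold reflect.
  - replace (1 - (1 - f (1 - x))) with (f (1 - x)) by ring.
    rewrite (inverse_of_l f' f) by exact HI. ring.
  - replace (1 - (1 - f' (1 - x))) with (f' (1 - x)) by ring.
    rewrite (inverse_of_r f' f) by exact HI. ring.
Qed.

Lemma germ1_comp f g s1 s2 e1 e2 : germ1 f s1 e1 -> germ1 g s2 e2 -> 0 < s2 ->
  germ1 (comp f g) (s1 * s2) (Rmin e2 (e1 / s2)).
Proof. unfold germ1. rewrite reflect_comp. apply germ0_comp. Qed.

Lemma germ1_inv f f' s e : germ1 f s e -> 0 < s -> inverse_of f' f -> germ1 f' (/ s) (s * e).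
Proof. unfold germ1. intros Hg Hs HI. exact (germ0_inv _ _ s e Hg Hs (reflect_inverse f' f HI)). Qed.

Lemma Ftau_has_germ0 f : in_Ftau f -> exists k e, germ0 f (tpow k) e.
Proof.
  intros Hf. destruct (Ftau_breaks f Hf) as [L HL].
  destruct (PL_breaks_piece 0 1 f L 0 HL ltac:(lra)) as (l1 & l2 & k & B1 & B2 & _ & Hk).
  replace l1 with 0 in Hk by lra.
  exists k, l2. split; [lra|]. intros x Hx. rewrite Hk, (Ftau_0 f Hf) by lra. ring.
Qed.

Lemma Ftau_has_germ1 f : in_Ftau f -> exists k e, germ1 f (tpow k) e.
Proof.
  intros Hf. destruct (Ftau_breaks f Hf) as [L HL]. pose proof HL as [HLin _ Hb Hpc _].
  destruct (list_max_with (fun l => l < 1) L) as (m & Hm & Pm & Mm).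
  { exists 0. split; [exact (breaks_lo _ _ _ _ HL) | lra]. }
  destruct (HLin m Hm) as [_ Bm].
  destruct (Hpc m 1) as [k Hk]; try lra.
  { intros l Hl [H1 H2]. specialize (Mm l Hl H2). lra. }
  exists k, (1 - m). split; [lra|]. intros x Hx. unfold reflect.
  pose proof (Hk 1 ltac:(lra)) as H1. rewrite (Ftau_1 f Hf) in H1.
  rewrite Hk by lra. lra.
Qed.

Lemma germ0_id : germ0 idR 1 1.
Proof. split; [lra|]. intros. unfold idR. ring. Qed.

Lemma germ1_id : germ1 idR 1 1.
Proof. split; [lra|]. intros. unfold reflect, idR. ring. Qed.

Lemma germ0_fixed u e : 0 < e -> (forall x, 0 <= x <= e -> u x = x) -> germ0 u 1 e.
Proof. intros He H. split; [exact He|]. intros x Hx. rewrite H by exact Hx. ring. Qed.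

Lemma germ1_fixed u e : 0 < e -> (forall x, 1 - e <= x <= 1 -> u x = x) -> germ1 u 1 e.
Proof. intros He H. split; [exact He|]. intros x Hx. unfold reflect. rewrite H by lra. ring. Qed.

Definition compact_supp (h : R -> R) : Prop :=
  exists c d, 0 < c /\ c <= d /\ d < 1 /\ supp_in h c d.

Lemma compact_supp_of_germs h e e' : in_Ftau h -> germ0 h 1 e -> germ1 h 1 e' -> compact_supp h.
Proof.
  intros Hh [He H0] [He' H1]. exists (Rmin e (1 / 2)), (Rmax (1 - e') (1 / 2)).
  pose proof (Rmin_l e (1 / 2)). pose proof (Rmin_r e (1 / 2)).
  pose proof (Rmax_l (1 - e') (1 / 2)). pose proof (Rmax_r (1 - e') (1 / 2)).
  split; [apply Rmin_glb_lt; lra|split; [lra|split; [apply Rmax_lub_lt; lra|]]].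
  intros x [Hx|Hx].
  - destruct (Rlt_dec x 0); [apply Ftau_outside; auto|]. rewrite H0 by lra. ring.
  - destruct (Rlt_dec 1 x); [apply Ftau_outside; auto|].
    specialize (H1 (1 - x) ltac:(lra)). unfold reflect in H1.
    replace (1 - (1 - x)) with x in H1 by ring. lra.
Qed.

Lemma compact_supp_comp f g : compact_supp f -> compact_supp g -> compact_supp (comp f g).
Proof.
  intros (c1 & d1 & H1 & H2 & H3 & H4) (c2 & d2 & G1 & G2 & G3 & G4).
  exists (Rmin c1 c2), (Rmax d1 d2).
  pose proof (Rmin_l c1 c2). pose proof (Rmin_r c1 c2).
  pose proof (Rmax_l d1 d2). pose proof (Rmax_r d1 d2).
  split; [apply Rmin_glb_lt; lra|split; [lra|split; [apply Rmax_lub_lt; lra|]]].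
  intros x Hx. unfold Defs.comp. rewrite G4 by lra. apply H4. lra.
Qed.

Lemma Ftau_germ0_tau_supp : exists A A', Ftau_pair A A' /\ germ0 A tau (tpow 3) /\
  forall x, tpow 2 <= x -> A x = x.
Proof.
  pose proof tpow_sums as (S1 & S2 & S3). pose proof tpow_chain as (C4 & C43 & C32 & C21 & C1).
  pose proof (tpow_opp1_mul 3) as M. pose proof (tpow_succ 3) as T4.
  change (3 + 1)%Z with 4%Z in M, T4.
  pose proof (PL_bij_affine 0 (tpow 3) 0 (tpow 4) 1 ltac:(lra) Ztau_0 (Ztau_tpow 3) Ztau_0
                ltac:(rewrite tpow_1, T4; ring)) as B1.
  pose proof (PL_bij_affine (tpow 3) (tpow 2) (tpow 4) (tpow 2) (- 1) ltac:(lra)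
                (Ztau_tpow 3) (Ztau_tpow 2) (Ztau_tpow 4)
                ltac:(replace (tpow 2 - tpow 3) with (tpow 4) by lra; lra)) as B2.
  pose proof (PL_bij_id (tpow 2) 1 ltac:(lra) (Ztau_tpow 2) Ztau_1) as B3.
  eexists; eexists; split;
    [exact (Ftau_pair_of_PL_bij _ _ (PL_bij_glue _ _ _ _ _ _ _ _ _ _
              (PL_bij_glue _ _ _ _ _ _ _ _ _ _ B1 B2) B3))|].
  split; [split; [lra|]|].
  - intros x Hx. rewrite extend_by_id_in, !glue_left by lra. rewrite tpow_1. ring.
  - intros x Hx. destruct (Rle_dec x 1); [|apply extend_by_id_out; lra].
    rewrite extend_by_id_in by lra. rewrite glue_right; [reflexivity| |lra].
    rewrite glue_right; [cbv beta | cbv beta; rewrite tpow_1, T4; ring | lra].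
    replace (tpow 2 - tpow 3) with (tpow 4) by lra. lra.
Qed.

Lemma Ftau_germ1_tau_supp : exists B B', Ftau_pair B B' /\ germ1 B tau (tpow 3) /\
  forall x, x <= tpow 1 -> B x = x.
Proof.
  pose proof tpow_sums as (S1 & S2 & S3). pose proof tpow_chain as (C4 & C43 & C32 & C21 & C1).
  pose proof (tpow_opp1_mul 3) as M. pose proof (tpow_succ 3) as T4.
  change (3 + 1)%Z with 4%Z in M, T4.
  assert (Z3 : in_Ztau (1 - tpow 3)) by (apply Ztau_sub; [apply Ztau_1 | apply Ztau_tpow]).
  assert (Z4 : in_Ztau (1 - tpow 4)) by (apply Ztau_sub; [apply Ztau_1 | apply Ztau_tpow]).
  pose proof (PL_bij_id 0 (tpow 1) ltac:(lra) Ztau_0 (Ztau_tpow 1)) as B1.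
  pose proof (PL_bij_affine (tpow 1) (1 - tpow 3) (tpow 1) (1 - tpow 4) (- 1) ltac:(lra)
                (Ztau_tpow 1) Z3 (Ztau_tpow 1)
                ltac:(replace (1 - tpow 3 - tpow 1) with (tpow 4) by lra; lra)) as B2.
  pose proof (PL_bij_affine (1 - tpow 3) 1 (1 - tpow 4) 1 1 ltac:(lra) Z3 Ztau_1 Z4
                ltac:(rewrite tpow_1, T4; ring)) as B3.
  eexists; eexists; split;
    [exact (Ftau_pair_of_PL_bij _ _ (PL_bij_glue _ _ _ _ _ _ _ _ _ _
              (PL_bij_glue _ _ _ _ _ _ _ _ _ _ B1 B2) B3))|].
  split; [split; [lra|]|].
  - intros x Hx. unfold reflect. rewrite extend_by_id_in by lra.
    rewrite glue_right; [rewrite tpow_1, T4; ring| |lra].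
    cbv beta. rewrite glue_right by (cbv beta; ring || lra). cbv beta.
    replace (1 - tpow 3 - tpow 1) with (tpow 4) by lra. lra.
  - intros x Hx. destruct (Rle_dec 0 x); [|apply extend_by_id_out; lra].
    rewrite extend_by_id_in, !glue_left by lra. reflexivity.
Qed.

Lemma Ftau_germ0_tau_wide : exists F F', Ftau_pair F F' /\ germ0 F tau (tpow 1).
Proof.
  pose proof tpow_sums as (S1 & S2 & S3). pose proof tpow_chain as (C4 & C43 & C32 & C21 & C1).
  pose proof (tpow_opp1_mul 1) as M. pose proof (tpow_succ 1) as T2.
  change (1 + 1)%Z with 2%Z in M, T2.
  pose proof (PL_bij_affine 0 (tpow 1) 0 (tpow 2) 1 ltac:(lra) Ztau_0 (Ztau_tpow 1) Ztau_0
                ltac:(rewrite T2, tpow_1; ring)) as B1.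
  pose proof (PL_bij_affine (tpow 1) 1 (tpow 2) 1 (- 1) ltac:(lra)
                (Ztau_tpow 1) Ztau_1 (Ztau_tpow 2)
                ltac:(replace (1 - tpow 1) with (tpow 2) by lra; lra)) as B2.
  eexists; eexists; split; [exact (Ftau_pair_of_PL_bij _ _ (PL_bij_glue _ _ _ _ _ _ _ _ _ _ B1 B2))|].
  split; [lra|]. intros x Hx. rewrite extend_by_id_in, glue_left by lra. rewrite tpow_1. ring.
Qed.

(** * The commutator subgroup consists of compactly supported elements *)

Definition comm (f f' g g' : R -> R) : R -> R := comp f' (comp g' (comp f g)).

Lemma Ftau_pair_comm f f' g g' : Ftau_pair f f' -> Ftau_pair g g' ->
  Ftau_pair (comm f f' g g') (comm g g' f f').
Proof.
  intros Hf Hg.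
  exact (Ftau_pair_comp _ _ _ _ (Ftau_pair_sym _ _ Hf)
           (Ftau_pair_comp _ _ _ _ (Ftau_pair_sym _ _ Hg) (Ftau_pair_comp _ _ _ _ Hf Hg))).
Qed.

Lemma germ0_comm f f' g g' s t e1 e2 : germ0 f s e1 -> germ0 g t e2 -> 0 < s -> 0 < t ->
  inverse_of f' f -> inverse_of g' g -> exists e, germ0 (comm f f' g g') 1 e.
Proof.
  intros Hf Hg Hs Ht HIf HIg.
  pose proof (germ0_comp _ _ _ _ _ _ Hf Hg Ht) as C1.
  pose proof (germ0_comp _ _ _ _ _ _ (germ0_inv _ _ _ _ Hg Ht HIg) C1
                ltac:(apply Rmult_lt_0_compat; assumption)) as C2.
  pose proof (germ0_comp _ _ _ _ _ _ (germ0_inv _ _ _ _ Hf Hs HIf) C2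
                ltac:(apply Rmult_lt_0_compat; [apply Rinv_0_lt_compat | apply Rmult_lt_0_compat];
                      assumption)) as C3.
  eexists. replace 1 with (/ s * (/ t * (s * t))) by (field; lra). exact C3.
Qed.

Lemma reflect_comm f f' g g' :
  reflect (comm f f' g g') = comm (reflect f) (reflect f') (reflect g) (reflect g').
Proof. unfold comm. rewrite !reflect_comp. reflexivity. Qed.

Lemma germ1_comm f f' g g' s t e1 e2 : germ1 f s e1 -> germ1 g t e2 -> 0 < s -> 0 < t ->
  inverse_of f' f -> inverse_of g' g -> exists e, germ1 (comm f f' g g') 1 e.
Proof.
  unfold germ1. rewrite reflect_comm. intros Hf Hg Hs Ht HIf HIg.
  exact (germ0_comm _ _ _ _ _ _ _ _ Hf Hg Hs Ht (reflect_inverse _ _ HIf) (reflect_inverse _ _ HIg)).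
Qed.

Lemma comm_compact_supp f f' g g' : Ftau_pair f f' -> Ftau_pair g g' ->
  compact_supp (comm f f' g g').
Proof.
  intros Hf Hg. pose proof (Ftau_pair_comm _ _ _ _ Hf Hg) as (HC & _).
  pose proof Hf as (F1 & _ & FI). pose proof Hg as (G1 & _ & GI).
  destruct (Ftau_has_germ0 f F1) as (k1 & e1 & A1), (Ftau_has_germ0 g G1) as (k2 & e2 & A2).
  destruct (Ftau_has_germ1 f F1) as (m1 & d1 & B1), (Ftau_has_germ1 g G1) as (m2 & d2 & B2).
  destruct (germ0_comm _ _ _ _ _ _ _ _ A1 A2 (tpow_pos k1) (tpow_pos k2) FI GI) as [e He].
  destruct (germ1_comm _ _ _ _ _ _ _ _ B1 B2 (tpow_pos m1) (tpow_pos m2) FI GI) as [e' He'].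
  exact (compact_supp_of_germs _ _ _ HC He He').
Qed.

Lemma Ftau'_comm f f' g g' : Ftau_pair f f' -> Ftau_pair g g' -> in_Ftau' (comm f f' g g').
Proof.
  intros (Hf & _ & HIf) (Hg & _ & HIg). apply (Ftau'_mul idR); [exact Ftau'_id|].
  exists f, g, f', g'. repeat (split; [assumption|]). reflexivity.
Qed.

Lemma is_commutator_comm c : is_commutator c ->
  exists f f' g g', Ftau_pair f f' /\ Ftau_pair g g' /\ c = comm f f' g g'.
Proof.
  intros (f & g & f' & g' & Hf & Hg & HIf & HIg & ->). exists f, f', g, g'.
  split; [apply Ftau_pair_of; assumption|split; [apply Ftau_pair_of; assumption | reflexivity]].
Qed.

Lemma Ftau'_compact_supp h : in_Ftau' h -> exists h', Ftau_pair h h' /\ compact_supp h.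
Proof.
  induction 1 as [|h c _ (h' & Hpair & Hsupp) Hc].
  - exists idR. split; [exact Ftau_pair_id|].
    exists (1 / 2), (1 / 2). split; [lra|split; [lra|split; [lra|]]]. intros x _. reflexivity.
  - destruct (is_commutator_comm c Hc) as (f & f' & g & g' & Hf & Hg & ->).
    exists (comp (comm g g' f f') h'). split.
    + apply Ftau_pair_comp; [exact Hpair | apply Ftau_pair_comm; assumption].
    + apply compact_supp_comp; [exact Hsupp | apply comm_compact_supp; assumption].
Qed.

(* [g] agrees on [[c, d]] with [h] and is supported in [[d1, d2]]; [p] pushes
   [[d1, d2]] to the right of [d2], so [comm g' g p p' = g p' g' p] equals [g] on [[c, d]]. *)
Lemma Ftau_agrees_with_Ftau' h h' c d : Ftau_pair h h' -> 0 < c -> c <= d -> d < 1 ->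
  exists q q', in_Ftau' q /\ Ftau_pair q q' /\ forall x, c <= x <= d -> q x = h x.
Proof.
  intros Hh Hc Hcd Hd.
  destruct (Ftau_localize h h' c d Hh Hc Hcd Hd)
    as (g & g' & d1 & d2 & Hg & H1 & H2 & H3 & H4 & Z1 & Z2 & Hgh & Hgs).
  destruct (Ztau_dense d2 1 H4) as (j1 & Zj1 & Hj1).
  destruct (Ztau_dense j1 1 ltac:(lra)) as (j2 & Zj2 & Hj2).
  destruct (Ftau_two_points d1 d2 j1 j2) as (p & p' & Hp & Hp1 & Hp2); auto; try lra.
  pose proof Hg as (_ & _ & HIg). pose proof Hp as (P1 & _ & HIp).
  pose proof (Ftau_pair_sym _ _ Hg) as Hg'.
  exists (comm g' g p p'), (comm p p' g' g). split; [|split].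
  - apply Ftau'_comm; assumption.
  - apply Ftau_pair_comm; assumption.
  - intros x Hx. unfold comm, Defs.comp.
    assert (Hpx : j1 <= p x <= j2) by (rewrite <- Hp1, <- Hp2; split; apply Ftau_le; auto; lra).
    rewrite (supp_in_inverse g g' d1 d2 Hgs HIg (p x)) by lra.
    rewrite (inverse_of_l p' p) by exact HIp. apply Hgh, Hx.
Qed.

(** * Correcting the slopes at the endpoints *)

Definition zpow (A A' : R -> R) (k : Z) : R -> R :=
  match k with
  | Z0 => idR
  | Zpos p => Nat.iter (Pos.to_nat p) (comp A) idR
  | Zneg p => Nat.iter (Pos.to_nat p) (comp A') idR
  end.

Lemma iter_comp_comm A v n : comp A v = comp v A ->
  comp (Nat.iter n (comp A) idR) v = comp v (Nat.iter n (comp A) idR).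
Proof.
  intros H. induction n as [|n IH]; [reflexivity|]. simpl.
  set (An := Nat.iter n (comp A) idR) in *.
  change (comp A (comp An v) = comp v (comp A An)). rewrite IH.
  change (comp (comp A v) An = comp (comp v A) An). rewrite H. reflexivity.
Qed.

Lemma iter_comp_comm2 u v n m : comp u v = comp v u ->
  comp (Nat.iter n (comp u) idR) (Nat.iter m (comp v) idR)
  = comp (Nat.iter m (comp v) idR) (Nat.iter n (comp u) idR).
Proof. intros H. symmetry. apply iter_comp_comm. symmetry. apply iter_comp_comm, H. Qed.

Lemma iter_comp_pair A A' n : Ftau_pair A A' ->
  Ftau_pair (Nat.iter n (comp A) idR) (Nat.iter n (comp A') idR).
Proof.
  intros H. induction n as [|n IH]; [exact Ftau_pair_id|]. simpl.
  pose proof (Ftau_pair_comp _ _ _ _ H IH) as Hc.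
  rewrite (iter_comp_comm A' A' n eq_refl) in Hc. exact Hc.
Qed.

Lemma iter_comp_fixes A (S : R -> Prop) n x : (forall y, ~ S y -> A y = y) -> ~ S x ->
  Nat.iter n (comp A) idR x = x.
Proof.
  intros H Hx. induction n as [|n IH]; [reflexivity|].
  change (A (Nat.iter n (comp A) idR x) = x). rewrite IH. apply H, Hx.
Qed.

Lemma iter_comp_germ0 A s e n : germ0 A s e -> 0 < s ->
  exists e', germ0 (Nat.iter n (comp A) idR) (s ^ n) e'.
Proof.
  intros H Hs. induction n as [|n [e' He']]; [exists 1; exact germ0_id|].
  eexists. apply (germ0_comp _ _ _ _ _ _ H He'), pow_lt, Hs.
Qed.

Lemma iter_comp_germ1 A s e n : germ1 A s e -> 0 < s ->
  exists e', germ1 (Nat.iter n (comp A) idR) (s ^ n) e'.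
Proof.
  intros H Hs. induction n as [|n [e' He']]; [exists 1; exact germ1_id|].
  eexists. apply (germ1_comp _ _ _ _ _ _ H He'), pow_lt, Hs.
Qed.

Section Powers.

Variables A A' : R -> R.
Hypothesis HA : Ftau_pair A A'.

Lemma zpow_pair k : Ftau_pair (zpow A A' k) (zpow A A' (- k)).
Proof.
  destruct k; simpl;
    [exact Ftau_pair_id | apply iter_comp_pair, HA | apply iter_comp_pair, Ftau_pair_sym, HA].
Qed.

Lemma zpow_comm k m : comp (zpow A A' k) (zpow A A' m) = comp (zpow A A' m) (zpow A A' k).
Proof.
  pose proof HA as (_ & _ & H1 & H2).
  assert (C : comp A A' = comp A' A) by congruence.
  destruct k, m; simpl; try reflexivity; apply iter_comp_comm2; easy.
Qed.

Lemma zpow_fixes (S : R -> Prop) k x : (forall y, ~ S y -> A y = y) -> ~ S x -> zpow A A' k x = x.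
Proof.
  intros H Hx. pose proof HA as (_ & _ & HI).
  assert (H' : forall y, ~ S y -> A' y = y).
  { intros y Hy. rewrite <- (H y Hy) at 1. apply inverse_of_l, HI. }
  destruct k; simpl;
    [reflexivity | apply (iter_comp_fixes A S) | apply (iter_comp_fixes A' S)]; assumption.
Qed.

Lemma zpow_germ0 e k : germ0 A tau e -> exists e', germ0 (zpow A A' k) (tpow k) e'.
Proof.
  intros H. pose proof tau_pos. pose proof HA as (_ & _ & HI).
  destruct k; unfold tpow; simpl.
  - exists 1. exact germ0_id.
  - apply (iter_comp_germ0 A tau e); assumption.
  - rewrite <- pow_inv. apply (iter_comp_germ0 A' (/ tau) (tau * e)).
    + apply (germ0_inv A); assumption.
    + apply Rinv_0_lt_compat; assumption.
Qed.

Lemma zpow_germ1 e k : germ1 A tau e -> exists e', germ1 (zpow A A' k) (tpow k) e'.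
Proof.
  intros H. pose proof tau_pos. pose proof HA as (_ & _ & HI).
  destruct k; unfold tpow; simpl.
  - exists 1. exact germ1_id.
  - apply (iter_comp_germ1 A tau e); assumption.
  - rewrite <- pow_inv. apply (iter_comp_germ1 A' (/ tau) (tau * e)).
    + apply (germ1_inv A); assumption.
    + apply Rinv_0_lt_compat; assumption.
Qed.

End Powers.

Section Decomposition.

Variables A A' B B' : R -> R.
Hypotheses (HA : Ftau_pair A A') (HB : Ftau_pair B B').
Hypotheses (GA : germ0 A tau (tpow 3)) (GB : germ1 B tau (tpow 3)).
Hypotheses (A_fix : forall x, tpow 2 <= x -> A x = x) (B_fix : forall x, x <= tpow 1 -> B x = x).

Definition endpoint_corr (k m : Z) : R -> R := comp (zpow A A' k) (zpow B B' m).

Definition endpoint_corr_inv (k m : Z) : R -> R := comp (zpow B B' (- m)) (zpow A A' (- k)).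

Lemma endpoint_corr_pair k m : Ftau_pair (endpoint_corr k m) (endpoint_corr_inv k m).
Proof. exact (Ftau_pair_comp _ _ _ _ (zpow_pair A A' HA k) (zpow_pair B B' HB m)). Qed.

Let A_fixes x : ~ (0 < x < tpow 2) -> A x = x.
Proof.
  intros Hx. pose proof HA as (HA1 & _).
  destruct (Rlt_dec x 0); [apply Ftau_outside; auto|].
  destruct (Req_dec x 0) as [->|]; [apply Ftau_0, HA1 | apply A_fix; lra].
Qed.

Let B_fixes x : ~ (tpow 1 < x < 1) -> B x = x.
Proof.
  intros Hx. pose proof HB as (HB1 & _).
  destruct (Rlt_dec 1 x); [apply Ftau_outside; auto|].
  destruct (Req_dec x 1) as [->|]; [apply Ftau_1, HB1 | apply B_fix; lra].
Qed.

Lemma zpow_comm_disjoint k m : comp (zpow A A' k) (zpow B B' m) = comp (zpow B B' m) (zpow A A' k).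
Proof.
  pose proof tpow_chain as (_ & _ & _ & C21 & _).
  apply (disjoint_supports_comm _ _ (fun x => 0 < x < tpow 2) (fun x => tpow 1 < x < 1)).
  - apply (zpow_pair A A' HA).
  - apply (zpow_pair B B' HB).
  - intros x Hx. apply (zpow_fixes A A' HA (fun x => 0 < x < tpow 2)); [exact A_fixes | exact Hx].
  - intros x Hx. apply (zpow_fixes B B' HB (fun x => tpow 1 < x < 1)); [exact B_fixes | exact Hx].
  - intros x Hx Hx'. lra.
Qed.

Lemma endpoint_corr_comm k1 m1 k2 m2 :
  comp (endpoint_corr k1 m1) (endpoint_corr k2 m2) = comp (endpoint_corr k2 m2) (endpoint_corr k1 m1).
Proof.
  apply functional_extensionality. intros z. unfold endpoint_corr, Defs.comp.
  pose proof (fun k m => equal_f (zpow_comm_disjoint k m)) as AB.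
  pose proof (equal_f (zpow_comm A A' HA k1 k2)) as AA.
  pose proof (equal_f (zpow_comm B B' HB m1 m2)) as BB.
  unfold Defs.comp in AB, AA, BB.
  rewrite <- (AB k2 m1), AA, BB, (AB k1 m2). reflexivity.
Qed.

Lemma Ftau_decomp f f' : Ftau_pair f f' -> exists k m h h', Ftau_pair h h' /\ compact_supp h /\
  f = comp h (endpoint_corr k m) /\ f' = comp (endpoint_corr_inv k m) h'.
Proof.
  intros Hf. pose proof Hf as (F1 & _ & FI). pose proof tpow_chain as (C4 & C43 & C32 & C21 & C1).
  destruct (Ftau_has_germ0 f F1) as (k & e0 & G0), (Ftau_has_germ1 f F1) as (m & e1 & G1).
  pose proof (endpoint_corr_pair k m) as HE. pose proof HE as (_ & _ & EI).
  destruct (zpow_germ0 A A' HA (tpow 3) k GA) as [ea Ga].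
  destruct (zpow_germ1 B B' HB (tpow 3) m GB) as [eb Gb].
  assert (Gb0 : germ0 (zpow B B' m) 1 (tpow 1)).
  { apply germ0_fixed; [lra|]. intros x Hx.
    apply (zpow_fixes B B' HB (fun x => tpow 1 < x < 1)); [exact B_fixes | lra]. }
  assert (Ga1 : germ1 (zpow A A' k) 1 (1 - tpow 2)).
  { apply germ1_fixed; [lra|]. intros x Hx.
    apply (zpow_fixes A A' HA (fun x => 0 < x < tpow 2)); [exact A_fixes | lra]. }
  pose proof (tpow_pos k). pose proof (tpow_pos m).
  pose proof (germ0_inv _ _ _ _ (germ0_comp _ _ _ _ _ _ Ga Gb0 ltac:(lra)) ltac:(nra) EI) as GE0.
  pose proof (germ1_inv _ _ _ _ (germ1_comp _ _ _ _ _ _ Ga1 Gb ltac:(lra)) ltac:(nra) EI) as GE1.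
  pose proof (germ0_comp _ _ _ _ _ _ G0 GE0 ltac:(apply Rinv_0_lt_compat; nra)) as Gh0.
  pose proof (germ1_comp _ _ _ _ _ _ G1 GE1 ltac:(apply Rinv_0_lt_compat; nra)) as Gh1.
  exists k, m, (comp f (endpoint_corr_inv k m)), (comp (endpoint_corr k m) f').
  pose proof (Ftau_pair_comp _ _ _ _ Hf (Ftau_pair_sym _ _ HE)) as HH.
  split; [exact HH|split; [|split]].
  - replace (tpow k * / (tpow k * 1)) with 1 in Gh0 by (field; lra).
    replace (tpow m * / (1 * tpow m)) with 1 in Gh1 by (field; lra).
    exact (compact_supp_of_germs _ _ _ (proj1 HH) Gh0 Gh1).
  - apply functional_extensionality. intros z. unfold Defs.comp.
    rewrite (inverse_of_l (endpoint_corr_inv k m) (endpoint_corr k m)) by exact EI. reflexivity.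
  - apply functional_extensionality. intros z. unfold Defs.comp.
    rewrite (inverse_of_l (endpoint_corr_inv k m) (endpoint_corr k m)) by exact EI. reflexivity.
Qed.

End Decomposition.

Lemma comm_of_products h1 h1' E1 E1' h2 h2' E2 E2' :
  inverse_of E1' E1 -> inverse_of E2' E2 -> inverse_of h2' h2 -> comp E1 E2 = comp E2 E1 ->
  comm (comp h1 E1) (comp E1' h1') (comp h2 E2) (comp E2' h2')
  = comp (comp E1' (comp (comm h1 h1' (comp h2 E2) (comp E2' h2')) E1))
         (comp E2' (comp (comm E1 E1' h2 h2') E2)).
Proof.
  intros HI1 HI2 HIh C. apply functional_extensionality. intros z.
  unfold comm, Defs.comp.
  assert (C' : forall t, E2 (E1 (E2' (E1' t))) = t).
  { intros t. pose proof (equal_f C (E2' (E1' t))) as Ct. unfold Defs.comp in Ct.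
    rewrite <- Ct, (inverse_of_r E2' E2), (inverse_of_r E1' E1) by assumption. reflexivity. }
  rewrite C', (inverse_of_r h2' h2) by exact HIh. reflexivity.
Qed.

(** * Normal subgroups of F_tau' *)

Lemma Ftau_moves_interval g : in_Ftau g -> g <> idR ->
  exists j1 j2, in_Ztau j1 /\ in_Ztau j2 /\ 0 < j1 /\ j1 < j2 /\ j2 < 1 /\
    forall z, j1 <= z <= j2 -> ~ (j1 <= g z <= j2).
Proof.
  intros Hg Hne.
  destruct (not_all_ex_not _ _ (fun H => Hne (functional_extensionality g idR H))) as [x0 Hx0].
  unfold idR in Hx0.
  assert (Hx0' : 0 <= x0 <= 1).
  { apply NNPP. intros Hout. apply Hx0, Ftau_outside; [exact Hg | lra]. }
  pose proof (Ftau_unit g x0 Hg Hx0').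
  destruct (Rlt_dec x0 (g x0)) as [Hlt|Hge].
  - destruct (Ztau_dense x0 (g x0) Hlt) as (j1 & Z1 & Hj1).
    destruct (Ztau_dense j1 (g x0) ltac:(lra)) as (j2 & Z2 & Hj2).
    exists j1, j2. repeat (split; [assumption || lra|]).
    intros z Hz Hgz. pose proof (Ftau_increasing g x0 z Hg ltac:(lra)). lra.
  - assert (Hlt : g x0 < x0) by lra.
    destruct (Ztau_dense (g x0) x0 Hlt) as (j1 & Z1 & Hj1).
    destruct (Ztau_dense j1 x0 ltac:(lra)) as (j2 & Z2 & Hj2).
    exists j1, j2. repeat (split; [assumption || lra|]).
    intros z Hz Hgz. pose proof (Ftau_increasing g z x0 Hg ltac:(lra)). lra.
Qed.

Section NormalSubgroup.

Variable N : (R -> R) -> Prop.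
Hypothesis HN : normal_subgroup_of_Ftau' N.

Lemma normal_subset h : N h -> in_Ftau' h.
Proof. apply HN. Qed.

Lemma normal_comp h k : N h -> N k -> N (comp h k).
Proof. apply HN. Qed.

Lemma normal_inverse h h' : N h -> inverse_of h' h -> N h'.
Proof. apply HN. Qed.

Lemma normal_conj_Ftau' n g g' : N n -> in_Ftau' g -> inverse_of g' g -> N (comp g' (comp n g)).
Proof. apply HN. Qed.

(* [n] is supported in some [[c, d]], on whose preimage [h] agrees with an element of F_tau'. *)
Lemma normal_conj n h h' : N n -> Ftau_pair h h' -> N (comp h' (comp n h)).
Proof.
  intros Hn Hh. pose proof Hh as (H1 & H2 & _).
  destruct (Ftau'_compact_supp n (normal_subset n Hn))
    as (n' & (Hn1 & _) & c & d & Hc & Hcd & Hd & Hsupp).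
  destruct (Ftau_agrees_with_Ftau' h h' (h' c) (h' d) Hh) as (q & q' & Hq & HQ & Hagr);
    [apply Ftau_pos; auto | apply Ftau_le; auto | apply Ftau_lt_1; auto|].
  rewrite (conj_local n h h' q q' c d Hn1 Hsupp Hh HQ Hcd Hagr).
  apply normal_conj_Ftau'; [exact Hn | exact Hq | apply HQ].
Qed.

Lemma normal_mover g : N g -> g <> idR -> forall c d, 0 < c -> c <= d -> d < 1 ->
  exists x x', N x /\ Ftau_pair x x' /\ forall z, c <= z <= d -> ~ (c <= x z <= d).
Proof.
  intros Hg Hne c d Hc Hcd Hd.
  destruct (Ftau'_compact_supp g (normal_subset g Hg)) as (g' & Hgp & _).
  destruct (Ftau_moves_interval g (proj1 Hgp) Hne) as (j1 & j2 & Z1 & Z2 & H1 & H2 & H3 & Hmv).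
  destruct (Ztau_dense 0 c Hc) as (c' & Zc' & Hc').
  destruct (Ztau_dense d 1 Hd) as (d' & Zd' & Hd').
  destruct (Ftau_two_points c' d' j1 j2) as (r & r' & Hr & Rc & Rd); auto; try lra.
  pose proof Hr as (R1 & _ & RI).
  exists (comp r' (comp g r)), (comp r' (comp g' r)). split; [|split].
  - apply normal_conj; assumption.
  - exact (Ftau_pair_comp _ _ _ _ (Ftau_pair_sym _ _ Hr) (Ftau_pair_comp _ _ _ _ Hgp Hr)).
  - intros z Hz Hrz. unfold Defs.comp in Hrz.
    assert (Hz' : j1 <= r z <= j2) by (rewrite <- Rc, <- Rd; split; apply Ftau_le; auto; lra).
    apply (Hmv (r z) Hz').
    rewrite <- (inverse_of_r r' r (g (r z))) by exact RI.
    rewrite <- Rc, <- Rd. split; apply Ftau_le; auto; lra.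
Qed.

(* Higman's trick: with [w = x' u x] supported off [[c, d]], hence commuting with [v'],
   [comm m m' v v' = u' w v' w' u v = comm u u' v v'] for [m = comm x x' u u'] in [N]. *)
Lemma normal_higman x x' u u' v v' c d : N x -> Ftau_pair x x' ->
  (forall z, c <= z <= d -> ~ (c <= x z <= d)) -> Ftau_pair u u' -> Ftau_pair v v' ->
  supp_in u c d -> supp_in v c d -> N (comm u u' v v').
Proof.
  intros Nx HX Hmv HU HV Hu Hv.
  pose proof HX as (X1 & X2 & XI). pose proof HU as (U1 & U2 & UI). pose proof HV as (V1 & V2 & VI).
  pose proof (Ftau_pair_comm _ _ _ _ HX HU) as HM.
  assert (Nm : N (comm x x' u u')).
  { apply normal_comp; [apply (normal_inverse x); assumption | apply normal_conj; assumption]. }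
  assert (Nm' : N (comm u u' x x')) by (apply (normal_inverse _ _ Nm), HM).
  replace (comm u u' v v') with (comm (comm x x' u u') (comm u u' x x') v v').
  { apply normal_comp; [exact Nm' | apply normal_conj; assumption]. }
  set (w := comp x' (comp u x)).
  assert (Cw : comp w v' = comp v' w).
  { apply (disjoint_supports_comm w v' (fun z => c <= x z <= d) (fun z => c <= z <= d)).
    - exact (proj1 (Ftau_pair_comp _ _ _ _ (Ftau_pair_sym _ _ HX) (Ftau_pair_comp _ _ _ _ HU HX))).
    - exact V2.
    - intros z Hz. unfold w, Defs.comp. rewrite Hu by lra. apply inverse_of_l, XI.
    - intros z Hz. apply (supp_in_inverse v v' c d Hv VI). lra.
    - intros z Hz Hz'. exact (Hmv z Hz' Hz). }
  apply functional_extensionality. intros z. pose proof (equal_f Cw) as Cw'.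
  unfold comm, w, Defs.comp in *.
  rewrite Cw', (inverse_of_r x' x), (inverse_of_r u' u), (inverse_of_l x' x) by assumption.
  reflexivity.
Qed.

(* [f' h f] only depends on [f] near [f' [c, d]], where [f] can be replaced by an element
   supported inside (0, 1); Higman's trick then applies on a common support. *)
Lemma normal_comm_compact g h h' f f' : N g -> g <> idR -> Ftau_pair h h' -> compact_supp h ->
  Ftau_pair f f' -> N (comm h h' f f').
Proof.
  intros Ng Hne Hh (c & d & Hc & Hcd & Hd & Hs) Hf.
  pose proof Hf as (F1 & F2 & FI). pose proof Hh as (H1 & _).
  destruct (Ftau_localize f f' (f' c) (f' d) Hf)
    as (f0 & f0' & d1 & d2 & Hf0 & D1 & D2 & D3 & D4 & _ & _ & Hagr & Hs0);
    [apply Ftau_pos; auto | apply Ftau_le; auto | apply Ftau_lt_1; auto|].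
  assert (E : comp f' (comp h f) = comp f0' (comp h f0)) by (apply (conj_local h f f' f0 f0' c d); auto).
  unfold comm. rewrite E. fold (comm h h' f0 f0').
  pose proof (Rmin_l c d1). pose proof (Rmin_r c d1). pose proof (Rmax_l d d2). pose proof (Rmax_r d d2).
  set (c2 := Rmin c d1) in *. set (d3 := Rmax d d2) in *.
  assert (0 < c2) by (apply Rmin_glb_lt; lra). assert (d3 < 1) by (apply Rmax_lub_lt; lra).
  destruct (normal_mover g Ng Hne c2 d3 ltac:(lra) ltac:(lra) ltac:(lra)) as (x & x' & Nx & HX & Hmv).
  apply (normal_higman x x' h h' f0 f0' c2 d3); auto.
  - intros z Hz. apply Hs. lra.
  - intros z Hz. apply Hs0. lra.
Qed.

(* With [f = h1 E1] and [k = h2 E2] as in [Ftau_decomp], [comm_of_products] writes [comm f f' k k']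
   as a product of conjugates of commutators with a compactly supported entry. *)
Lemma normal_all_comm g : N g -> g <> idR -> forall f f' k k', Ftau_pair f f' -> Ftau_pair k k' ->
  N (comm f f' k k').
Proof.
  intros Ng Hne f f' k k' Hf Hk.
  destruct Ftau_germ0_tau_supp as (A & A' & HA & GA & A_fix).
  destruct Ftau_germ1_tau_supp as (B & B' & HB & GB & B_fix).
  pose proof (Ftau_decomp A A' B B' HA HB GA GB A_fix B_fix) as Hdecomp.
  destruct (Hdecomp f f' Hf) as (k1 & m1 & h1 & h1' & Hh1 & S1 & -> & ->).
  destruct (Hdecomp k k' Hk) as (k2 & m2 & h2 & h2' & Hh2 & S2 & -> & ->).
  pose proof (endpoint_corr_pair A A' B B' HA HB k1 m1) as HE1.
  pose proof (endpoint_corr_pair A A' B B' HA HB k2 m2) as HE2.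
  rewrite comm_of_products
    by (apply HE1 || apply HE2 || apply Hh2 || apply endpoint_corr_comm; assumption).
  apply normal_comp; (apply normal_conj; [|assumption]).
  - apply (normal_comm_compact g); assumption.
  - apply (normal_inverse
             (comm h2 h2' (endpoint_corr A A' B B' k1 m1) (endpoint_corr_inv A A' B B' k1 m1))).
    + apply (normal_comm_compact g); assumption.
    + apply (Ftau_pair_comm _ _ _ _ Hh2 HE1).
Qed.

End NormalSubgroup.

(* [F] and [A] do not commute: [F (A (tau^2)) = tau^3] but [A (F (tau^2)) = tau^4]. *)
Lemma Ftau'_nontrivial : exists h, in_Ftau' h /\ h <> idR.
Proof.
  destruct Ftau_germ0_tau_wide as (F & F' & HF & _ & Fg).
  destruct Ftau_germ0_tau_supp as (A & A' & HA & (_ & Ag) & A_fix).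
  pose proof HF as (_ & _ & FI). pose proof HA as (_ & _ & AI).
  pose proof tpow_chain as (C4 & C43 & C32 & C21 & C1).
  pose proof (tpow_succ 2) as T3. pose proof (tpow_succ 3) as T4.
  change (2 + 1)%Z with 3%Z in T3. change (3 + 1)%Z with 4%Z in T4.
  exists (comm F F' A A'). split; [apply Ftau'_comm; assumption|]. intros E.
  pose proof (equal_f E (tpow 2)) as H. unfold comm, Defs.comp, idR in H.
  apply (f_equal F) in H. rewrite (inverse_of_r F' F) in H by exact FI.
  apply (f_equal A) in H. rewrite (inverse_of_r A' A) in H by exact AI.
  rewrite (A_fix (tpow 2)), (Fg (tpow 2)), <- T3, (Ag (tpow 3)), <- T4 in H by lra. lra.
Qed.

Lemma normal_trivial_or_all N : normal_subgroup_of_Ftau' N ->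
  (forall h, N h -> h = idR) \/ (forall h, in_Ftau' h -> N h).
Proof.
  intros HN. destruct (classic (exists g, N g /\ g <> idR)) as [(g & Ng & Hne)|Hno].
  - right. induction 1 as [|h c _ IH Hc]; [apply HN|].
    apply (normal_comp N HN); [exact IH|].
    destruct (is_commutator_comm c Hc) as (f & f' & k & k' & Hf & Hk & ->).
    exact (normal_all_comm N HN g Ng Hne f f' k k' Hf Hk).
  - left. intros h Hh. apply NNPP. intros Hne. apply Hno. exists h. split; assumption.
Qed.

Theorem mainTheorem5 : Ftau'_simple.
Proof. split; [exact Ftau'_nontrivial | exact normal_trivial_or_all]. Qed.
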